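(* Let $f$ be a complex-valued function that is holomorphic on an open neighborhood of the closed upper half-plane $\{x+yi : y\ge 0\}$ except at finitely many isolated singular points, each of which has strictly positive imaginary part. Suppose that: (i) for all real $x$ with $|x|$ sufficiently large, the improper integral $\int_{0}^{\infty} f(x+yi)\,dy$ converges, and $\int_{0}^{\infty} f(x+yi)\,dy \to 0$ as $x\to+\infty$ and as $x\to-\infty$; (ii) for each bounded interval $I\subset\mathbb{R}$, $\int_{I} f(x+yi)\,dx \to 0$ as $y\to\infty$. Then the improper integral $\int_{-\infty}^{\infty} f(x)\,dx$ (that is, $\lim_{A,B\to+\infty}\int_{-A}^{B} f(x)\,dx$) exists and equals $2\pi i$ times the sum of the residues of $f$ at its singular points in the upper half-plane.
   Context: The residue of $f$ at an isolated singularity $z_0$ is the coefficient of $(z-z_0)^{-1}$ in the Laurent expansion of $f$ about $z_0$. *)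

From Stdlib Require Import Reals ZArith List ClassicalEpsilon.
From Coquelicot Require Import Coquelicot.
Open Scope R_scope.

Fixpoint Cpown (z : C) (n : nat) : C :=
  match n with O => RtoC 1 | S m => Cmult z (Cpown z m) end.

Definition holo_at (f : C -> C) (z : C) : Prop :=
  @ex_derive C_AbsRing C_NormedModule f z.

(* a : Z -> C are the coefficients of a Laurent expansion of f about z0,
   valid on some punctured disc 0 < |z - z0| < r:
   f z = sum_{n>=0} a_n (z-z0)^n + sum_{n>=1} a_{-n} (z-z0)^{-n}. *)
Definition is_laurent_expansion (f : C -> C) (z0 : C) (a : Z -> C) : Prop :=
  exists r : R, 0 < r /\
    forall z : C, 0 < Cmod (Cminus z z0) < r ->
      exists p q : C,
        @is_series R_AbsRing C_R_NormedModule
          (fun n : nat => Cmult (a (Z.of_nat n)) (Cpown (Cminus z z0) n)) p /\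
        @is_series R_AbsRing C_R_NormedModule
          (fun n : nat => Cmult (a (- Z.of_nat (S n))%Z)
                                (Cinv (Cpown (Cminus z z0) (S n)))) q /\
        f z = Cplus p q.

(* The residue of f at z0: the coefficient of (z - z0)^{-1} in the Laurent
   expansion of f about z0 (Laurent coefficients are unique, so this is
   well defined whenever z0 is an isolated singularity). *)
Definition residue (f : C -> C) (z0 : C) : C :=
  epsilon (inhabits (RtoC 0))
    (fun c => exists a : Z -> C, is_laurent_expansion f z0 a /\ a (-1)%Z = c).

Definition Csum (l : list C) : C := fold_right Cplus (RtoC 0) l.

From Stdlib Require Import Reals ZArith List ClassicalEpsilon FunctionalExtensionality Lra Lia.
From Coquelicot Require Import Coquelicot.
Import ListNotations.
Open Scope R_scope.

Ltac Rmax_bounds :=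
  repeat match goal with |- context [Rmax ?u ?v] =>
    generalize (Rmax_l u v) (Rmax_r u v); generalize (Rmax u v) end; intros.

Notation C_self_module := (AbsRing_NormedModule C_AbsRing).
Notation is_Cderive := (@is_derive C_AbsRing C_self_module).

Lemma Cmod_fst (z : C) : Rabs (fst z) <= Cmod z.
Proof. eapply Rle_trans; [apply Rmax_l | apply Rmax_Cmod]. Qed.

Lemma Cmod_snd (z : C) : Rabs (snd z) <= Cmod z.
Proof. eapply Rle_trans; [apply Rmax_r | apply Rmax_Cmod]. Qed.

Lemma Cmod_pair_le (p q : R) : Cmod (p, q) <= Rabs p + Rabs q.
Proof.
  replace (p, q) with (RtoC p + Ci * RtoC q)%C by (apply injective_projections; simpl; ring).
  eapply Rle_trans; [apply Cmod_triangle |].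
  rewrite Cmod_mult, Cmod_Ci, !Cmod_R; lra.
Qed.

Lemma Cmod_triang_inv (u v : C) : Cmod u - Cmod v <= Cmod (u - v).
Proof.
  assert (H := Cmod_triangle (u - v) v).
  replace (u - v + v)%C with u in H by ring; lra.
Qed.

Lemma Cmod_minus_sym (u v : C) : Cmod (u - v) = Cmod (v - u).
Proof. replace (u - v)%C with (- (v - u))%C by ring; apply Cmod_opp. Qed.

Lemma Cminus_eq_contra (u v : C) : u <> v -> (u - v)%C <> 0.
Proof. intros H E; apply H; replace u with (u - v + v)%C by ring; rewrite E; ring. Qed.

Lemma Cminus_diag_uniq (u v : C) : (u - v)%C = 0 -> u = v.
Proof. intros E; replace u with (u - v + v)%C by ring; rewrite E; ring. Qed.

Lemma neq_of_Cmod_pos (u v : C) : 0 < Cmod (u - v) -> u <> v.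
Proof. intros H ->; replace (v - v)%C with (RtoC 0) in H by ring; rewrite Cmod_0 in H; lra. Qed.

Lemma pair_neq (x y a b : R) : x <> a \/ y <> b -> (x, y) <> (a, b).
Proof. intros [H | H] E; injection E; auto. Qed.

Lemma Cinv_0 : Cinv 0 = 0.
Proof. apply injective_projections; simpl; unfold Rdiv; ring. Qed.

Lemma Cinv_mult (u v : C) : (/ (u * v) = / u * / v)%C.
Proof.
  destruct (Classical_Prop.classic (u = 0)) as [-> | Hu].
  { replace (0 * v)%C with (RtoC 0) by ring; rewrite Cinv_0; ring. }
  destruct (Classical_Prop.classic (v = 0)) as [-> | Hv].
  { replace (u * 0)%C with (RtoC 0) by ring; rewrite Cinv_0; ring. }
  field; auto.
Qed.

Lemma Cinv_opp (z : C) : (/ - z = - / z)%C.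
Proof.
  replace (- z)%C with (RtoC (-1) * z)%C by (apply injective_projections; simpl; ring).
  rewrite Cinv_mult.
  replace (/ RtoC (-1))%C with (RtoC (-1)) by (apply injective_projections; simpl; field).
  apply injective_projections; simpl; ring.
Qed.

Lemma Cpown_mult (u v : C) n : Cpown (u * v) n = (Cpown u n * Cpown v n)%C.
Proof. induction n; simpl; [apply injective_projections; simpl; ring | rewrite IHn; ring]. Qed.

Lemma Cmod_Cpown (z : C) n : Cmod (Cpown z n) = Cmod z ^ n.
Proof. induction n; simpl; [apply Cmod_1 | rewrite Cmod_mult, IHn; ring]. Qed.

Lemma Cpown_neq_0 (z : C) n : z <> 0 -> Cpown z n <> 0.
Proof.
  intros Hz; induction n; simpl.
  - intro E; injection E; lra.
  - intro E; apply Cmod_gt_0 in Hz; apply Cmod_gt_0 in IHn.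
    assert (X : Cmod (z * Cpown z n) = 0) by (rewrite E; apply Cmod_0).
    rewrite Cmod_mult in X; nra.
Qed.

Lemma Cinv_Cpown (z : C) n : (/ Cpown z n)%C = Cpown (/ z) n.
Proof.
  induction n; simpl.
  - apply injective_projections; simpl; field.
  - rewrite Cinv_mult, IHn; reflexivity.
Qed.

Lemma norm_C (z : C) : @norm R_AbsRing C_R_NormedModule z = Cmod z.
Proof.
  unfold norm; simpl; unfold prod_norm, Cmod; simpl.
  unfold norm; simpl; unfold abs; simpl.
  rewrite !Rmult_1_r, <- !Rabs_mult, !Rabs_right; auto; apply Rle_ge, Rle_0_sqr.
Qed.

Lemma ball_of_Cmod (x y : C) (e : R) :
  Cmod (y - x) < e -> @ball C_R_NormedModule x e y.
Proof.
  intros H; split; simpl; unfold AbsRing_ball, abs, minus, plus, opp; simpl.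
  - eapply Rle_lt_trans; [apply (Cmod_fst (y - x)) | apply H].
  - eapply Rle_lt_trans; [apply (Cmod_snd (y - x)) | apply H].
Qed.

Lemma Cmod_of_ball (x y : C) (e : R) :
  @ball C_R_NormedModule x e y -> Cmod (y - x) < 2 * e.
Proof.
  intros [H1 H2].
  change (Rabs (fst y - fst x) < e) in H1; change (Rabs (snd y - snd x) < e) in H2.
  eapply Rle_lt_trans; [apply (Cmod_pair_le (fst y - fst x) (snd y - snd x)) | lra].
Qed.

Definition Ccontinuous (f : C -> C) (z : C) : Prop :=
  forall eps, 0 < eps -> exists d, 0 < d /\
    forall w, Cmod (w - z) < d -> Cmod (f w - f z) < eps.

Lemma Ccontinuous_horizontal (f : C -> C) (x y : R) :
  Ccontinuous f (x, y) -> @continuous R_UniformSpace C_R_NormedModule (fun t => f (t, y)) x.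
Proof.
  intros H; apply filterlim_locally; intros eps.
  destruct (H eps (cond_pos eps)) as [d [Hd Hw]].
  exists (mkposreal d Hd); intros t Ht; apply ball_of_Cmod, Hw.
  replace ((t, y) - (x, y))%C with (RtoC (t - x)) by (apply injective_projections; simpl; ring).
  rewrite Cmod_R; exact Ht.
Qed.

Lemma Ccontinuous_vertical (f : C -> C) (x y : R) :
  Ccontinuous f (x, y) -> @continuous R_UniformSpace C_R_NormedModule (fun t => f (x, t)) y.
Proof.
  intros H; apply filterlim_locally; intros eps.
  destruct (H eps (cond_pos eps)) as [d [Hd Hw]].
  exists (mkposreal d Hd); intros t Ht; apply ball_of_Cmod, Hw.
  replace ((x, t) - (x, y))%C with (Ci * RtoC (t - y))%C by (apply injective_projections; simpl; ring).
  rewrite Cmod_mult, Cmod_Ci, Cmod_R, Rmult_1_l; exact Ht.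
Qed.

Lemma is_Cderive_approx (f : C -> C) (z l : C) :
  is_Cderive f z l -> forall eps, 0 < eps -> exists d, 0 < d /\
    forall w, Cmod (w - z) < d -> Cmod (f w - f z - l * (w - z)) <= eps * Cmod (w - z).
Proof.
  intros [_ Hd] eps Heps.
  destruct (Hd z (fun P H => H) (mkposreal eps Heps)) as [d Hw].
  exists d; split; [apply cond_pos |]; intros w Hwz.
  replace (l * (w - z))%C with ((w - z) * l)%C by ring.
  exact (Hw w Hwz).
Qed.

Lemma is_Cderive_of_approx (f : C -> C) (z l : C) :
  (forall eps, 0 < eps -> exists d, 0 < d /\
    forall w, Cmod (w - z) < d -> Cmod (f w - f z - l * (w - z)) <= eps * Cmod (w - z)) ->
  is_Cderive f z l.
Proof.
  intros H; split; [apply is_linear_scal_l |].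
  intros z' Hz'.
  apply (is_filter_lim_locally_unique (K := C_AbsRing) (V := C_self_module)) in Hz'.
  subst z'.
  intros eps; destruct (H eps (cond_pos eps)) as [d [Hd Hw]].
  exists (mkposreal d Hd); intros w Hwz.
  specialize (Hw w Hwz); replace (l * (w - z))%C with ((w - z) * l)%C in Hw by ring.
  exact Hw.
Qed.

Lemma is_Cderive_Ccontinuous (f : C -> C) (z l : C) : is_Cderive f z l -> Ccontinuous f z.
Proof.
  intros Hf eps Heps.
  destruct (is_Cderive_approx f z l Hf 1 Rlt_0_1) as [d [Hd Hw]].
  assert (Hl := Cmod_ge_0 l).
  exists (Rmin d (eps / (Cmod l + 2))); split.
  { apply Rmin_glb_lt; auto; apply Rdiv_lt_0_compat; lra. }
  intros w Hwz.
  assert (Hwd : Cmod (w - z) < d) by (eapply Rlt_le_trans; [apply Hwz | apply Rmin_l]).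
  assert (Hwe : Cmod (w - z) * (Cmod l + 2) < eps).
  { apply (Rmult_lt_reg_r (/ (Cmod l + 2))); [apply Rinv_0_lt_compat; lra |].
    rewrite Rmult_assoc, Rinv_r, Rmult_1_r by lra.
    eapply Rlt_le_trans; [apply Hwz | apply Rmin_r]. }
  specialize (Hw w Hwd).
  replace (f w - f z)%C with ((f w - f z - l * (w - z)) + l * (w - z))%C by ring.
  eapply Rle_lt_trans; [apply Cmod_triangle |]; rewrite Cmod_mult.
  assert (Hc := Cmod_ge_0 (w - z)); nra.
Qed.

Lemma holo_at_iff (f : C -> C) (z : C) : holo_at f z <-> exists l, is_Cderive f z l.
Proof.
  split; intros [l [_ H]]; exists l; (split; [apply is_linear_scal_l | exact H]).
Qed.

Lemma holo_at_Ccontinuous (f : C -> C) (z : C) : holo_at f z -> Ccontinuous f z.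
Proof. intros [l Hl]%holo_at_iff; eapply is_Cderive_Ccontinuous; eauto. Qed.

Lemma is_Cderive_Cinv (z : C) : z <> 0 -> is_Cderive Cinv z (- / (z * z))%C.
Proof.
  intros Hz; apply is_Cderive_of_approx; intros eps He.
  set (m := Cmod z); assert (Hm : 0 < m) by (apply Cmod_gt_0; auto).
  exists (Rmin (m / 2) (eps * m * m * m / 2)); split.
  { apply Rmin_glb_lt; [lra |]; apply Rdiv_lt_0_compat; [| lra].
    repeat apply Rmult_lt_0_compat; auto. }
  intros w Hw.
  assert (Hw1 : Cmod (w - z) < m / 2) by (eapply Rlt_le_trans; [apply Hw | apply Rmin_l]).
  assert (Hw2 : Cmod (w - z) < eps * m * m * m / 2) by (eapply Rlt_le_trans; [apply Hw | apply Rmin_r]).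
  assert (Hwm : m / 2 <= Cmod w).
  { assert (X := Cmod_triang_inv z (z - w)); replace (z - (z - w))%C with w in X by ring.
    rewrite Cmod_minus_sym in X; fold m in X; lra. }
  assert (Hw0 : w <> 0) by (intros ->; rewrite Cmod_0 in Hwm; lra).
  replace (/ w - / z - - / (z * z) * (w - z))%C with ((w - z) * (w - z) * / (w * (z * z)))%C
    by (field; auto).
  rewrite !Cmod_mult, Cmod_inv, !Cmod_mult by (repeat apply Cmult_neq_0; auto).
  fold m; set (r := Cmod (w - z)) in *; set (q := Cmod w) in *.
  assert (Hr : 0 <= r) by apply Cmod_ge_0.
  apply Rle_trans with (r * r * / (m / 2 * (m * m))).
  { apply Rmult_le_compat_l; [nra |]; apply Rinv_le_contravar.
    - repeat apply Rmult_lt_0_compat; lra.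
    - apply Rmult_le_compat_r; nra. }
  apply Rle_trans with (r * (eps * m * m * m / 2) * / (m / 2 * (m * m))).
  { apply Rmult_le_compat_r; [left; apply Rinv_0_lt_compat; repeat apply Rmult_lt_0_compat; lra |].
    apply Rmult_le_compat_l; lra. }
  right; field; lra.
Qed.

Lemma is_Cderive_value (f : C -> C) (z l l' : C) : l = l' -> is_Cderive f z l -> is_Cderive f z l'.
Proof. intros ->; auto. Qed.

Lemma is_Cderive_const (k z : C) : is_Cderive (fun _ => k) z (RtoC 0).
Proof. apply (is_derive_const (K := C_AbsRing) (V := C_self_module)). Qed.

Lemma is_Cderive_sub_const (s z : C) : is_Cderive (fun w => w - s)%C z (RtoC 1).
Proof.
  eapply is_Cderive_value; [| exact (is_derive_minus (K := C_AbsRing) (V := C_self_module)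
    (fun w => w) (fun _ => s) z _ _ (is_derive_id z) (is_Cderive_const s z))].
  apply injective_projections; simpl; ring.
Qed.

Lemma is_Cderive_plus (f g : C -> C) (z l1 l2 : C) :
  is_Cderive f z l1 -> is_Cderive g z l2 -> is_Cderive (fun w => f w + g w)%C z (l1 + l2)%C.
Proof. exact (is_derive_plus (K := C_AbsRing) (V := C_self_module) f g z l1 l2). Qed.

Lemma is_Cderive_minus (f g : C -> C) (z l1 l2 : C) :
  is_Cderive f z l1 -> is_Cderive g z l2 -> is_Cderive (fun w => f w - g w)%C z (l1 - l2)%C.
Proof. exact (is_derive_minus (K := C_AbsRing) (V := C_self_module) f g z l1 l2). Qed.

Lemma is_Cderive_mult (f g : C -> C) (z l1 l2 : C) :
  is_Cderive f z l1 -> is_Cderive g z l2 ->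
  is_Cderive (fun w => f w * g w)%C z (l1 * g z + f z * l2)%C.
Proof. intros H1 H2; exact (is_derive_mult (K := C_AbsRing) f g z l1 l2 H1 H2 Cmult_comm). Qed.

Lemma is_Cderive_scale (f : C -> C) (k z l : C) :
  is_Cderive f z l -> is_Cderive (fun w => k * f w)%C z (k * l)%C.
Proof.
  intros H; eapply is_Cderive_value; [| apply is_Cderive_mult; [apply is_Cderive_const | exact H]].
  apply injective_projections; simpl; ring.
Qed.

Lemma is_Cderive_inv (f : C -> C) (z l : C) : is_Cderive f z l -> f z <> 0 ->
  is_Cderive (fun w => / f w)%C z (- l / (f z * f z))%C.
Proof.
  intros Hf Hz; eapply is_Cderive_value;
    [| exact (is_derive_comp (K := C_AbsRing) (V := C_self_module) Cinv f z _ l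
        (is_Cderive_Cinv _ Hz) Hf)].
  change (scal l (- / (f z * f z)))%C with (l * - / (f z * f z))%C; unfold Cdiv; ring.
Qed.

Lemma is_Cderive_pown (f : C -> C) (n : nat) (z l : C) : is_Cderive f z l ->
  is_Cderive (fun w => Cpown (f w) (S n)) z (INR (S n) * l * Cpown (f z) n)%C.
Proof.
  intros Hf; induction n.
  - eapply is_Cderive_value;
      [| exact (is_Cderive_mult f (fun _ => RtoC 1) z _ _ Hf (is_Cderive_const _ z))].
    apply injective_projections; simpl; ring.
  - eapply is_Cderive_value; [| exact (is_Cderive_mult f (fun w => Cpown (f w) (S n)) z _ _ Hf IHn)].
    change (Cpown (f z) (S n)) with (f z * Cpown (f z) n)%C.
    rewrite (S_INR (S n)), RtoC_plus; simpl Cpown; ring.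
Qed.

Lemma holo_at_ext (f g : C -> C) (z : C) : (forall w, f w = g w) -> holo_at f z -> holo_at g z.
Proof. intros E [l H]%holo_at_iff; apply holo_at_iff; exists l; eapply is_derive_ext; eauto. Qed.

Lemma holo_at_const (k z : C) : holo_at (fun _ => k) z.
Proof. apply holo_at_iff; eexists; apply is_Cderive_const. Qed.

Lemma holo_at_sub_const (s z : C) : holo_at (fun w => w - s)%C z.
Proof. apply holo_at_iff; eexists; apply is_Cderive_sub_const. Qed.

Lemma holo_at_plus (f g : C -> C) (z : C) :
  holo_at f z -> holo_at g z -> holo_at (fun w => f w + g w)%C z.
Proof.
  intros [l1 H1]%holo_at_iff [l2 H2]%holo_at_iff; apply holo_at_iff; eexists; apply is_Cderive_plus; eauto.
Qed.

Lemma holo_at_minus (f g : C -> C) (z : C) :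
  holo_at f z -> holo_at g z -> holo_at (fun w => f w - g w)%C z.
Proof.
  intros [l1 H1]%holo_at_iff [l2 H2]%holo_at_iff; apply holo_at_iff; eexists; apply is_Cderive_minus; eauto.
Qed.

Lemma holo_at_mult (f g : C -> C) (z : C) :
  holo_at f z -> holo_at g z -> holo_at (fun w => f w * g w)%C z.
Proof.
  intros [l1 H1]%holo_at_iff [l2 H2]%holo_at_iff; apply holo_at_iff; eexists; apply is_Cderive_mult; eauto.
Qed.

Lemma holo_at_scale (f : C -> C) (k z : C) : holo_at f z -> holo_at (fun w => k * f w)%C z.
Proof. intros [l H]%holo_at_iff; apply holo_at_iff; eexists; apply is_Cderive_scale; eauto. Qed.

Lemma holo_at_inv (f : C -> C) (z : C) : holo_at f z -> f z <> 0 -> holo_at (fun w => / f w)%C z.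
Proof. intros [l H]%holo_at_iff Hz; apply holo_at_iff; eexists; apply is_Cderive_inv; eauto. Qed.

Lemma holo_at_pown (f : C -> C) (n : nat) (z : C) :
  holo_at f z -> holo_at (fun w => Cpown (f w) n) z.
Proof.
  intros [l H]%holo_at_iff; destruct n; [exact (holo_at_const (RtoC 1) z) |].
  apply holo_at_iff; eexists; apply is_Cderive_pown; eauto.
Qed.

Lemma holo_at_inv_sub (s z : C) : z <> s -> holo_at (fun w => / (w - s))%C z.
Proof. intros H; apply holo_at_inv; [apply holo_at_sub_const | apply Cminus_eq_contra; auto]. Qed.

Notation CInt := (@RInt C_R_CompleteNormedModule).
Notation ex_CInt := (@ex_RInt C_R_NormedModule).
Notation is_CInt := (@is_RInt C_R_NormedModule).

Lemma is_CInt_scale (g : R -> C) (a b : R) (k l : C) :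
  is_CInt g a b l -> is_CInt (fun t => k * g t)%C a b (k * l)%C.
Proof.
  intros H; destruct k as [k1 k2], l as [l1 l2].
  assert (H1 := is_RInt_fct_extend_fst _ _ _ _ H).
  assert (H2 := is_RInt_fct_extend_snd _ _ _ _ H); simpl in H1, H2.
  apply (is_RInt_fct_extend_pair (U := R_NormedModule) (V := R_NormedModule)); simpl.
  - exact (is_RInt_minus _ _ _ _ _ _ (is_RInt_scal _ _ _ k1 _ H1) (is_RInt_scal _ _ _ k2 _ H2)).
  - exact (is_RInt_plus _ _ _ _ _ _ (is_RInt_scal _ _ _ k1 _ H2) (is_RInt_scal _ _ _ k2 _ H1)).
Qed.

Lemma ex_CInt_scale (g : R -> C) (a b : R) (k : C) :
  ex_CInt g a b -> ex_CInt (fun t => k * g t)%C a b.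
Proof. intros [l H]; exists (k * l)%C; apply is_CInt_scale; auto. Qed.

Lemma CInt_scale (g : R -> C) (a b : R) (k : C) :
  ex_CInt g a b -> CInt (fun t => k * g t)%C a b = (k * CInt g a b)%C.
Proof.
  intros H; apply (is_RInt_unique (V := C_R_CompleteNormedModule)).
  apply is_CInt_scale, (RInt_correct (V := C_R_CompleteNormedModule)); auto.
Qed.

Lemma CInt_plus (g h : R -> C) (a b : R) : ex_CInt g a b -> ex_CInt h a b ->
  CInt (fun t => g t + h t)%C a b = (CInt g a b + CInt h a b)%C.
Proof. apply (RInt_plus (V := C_R_CompleteNormedModule)). Qed.

Lemma CInt_minus (g h : R -> C) (a b : R) : ex_CInt g a b -> ex_CInt h a b ->
  CInt (fun t => g t - h t)%C a b = (CInt g a b - CInt h a b)%C.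
Proof. apply (RInt_minus (V := C_R_CompleteNormedModule)). Qed.

Lemma CInt_Chasles (g : R -> C) (a m b : R) : ex_CInt g a m -> ex_CInt g m b ->
  CInt g a b = (CInt g a m + CInt g m b)%C.
Proof. intros; symmetry; apply (RInt_Chasles (V := C_R_CompleteNormedModule)); auto. Qed.

Lemma CInt_norm_le (g : R -> C) (a b M : R) : a <= b -> ex_CInt g a b ->
  (forall x, a <= x <= b -> Cmod (g x) <= M) -> Cmod (CInt g a b) <= M * (b - a).
Proof.
  intros Hab Hex H; rewrite <- norm_C.
  apply (norm_RInt_le g (fun _ => M) a b _ (M * (b - a))); auto.
  - intros; rewrite norm_C; auto.
  - apply (RInt_correct (V := C_R_CompleteNormedModule)); auto.
  - replace (M * (b - a)) with (scal (b - a) M) by (unfold scal; simpl; unfold mult; simpl; ring).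
    apply (is_RInt_const (V := R_NormedModule)).
Qed.

Lemma ex_CInt_horizontal (f : C -> C) (a b y : R) : a <= b ->
  (forall x, a <= x <= b -> Ccontinuous f (x, y)) -> ex_CInt (fun x => f (x, y)) a b.
Proof.
  intros Hab H; apply (ex_RInt_continuous (V := C_R_CompleteNormedModule)).
  intros z Hz; rewrite Rmin_left, Rmax_right in Hz by lra.
  apply Ccontinuous_horizontal, H, Hz.
Qed.

Lemma ex_CInt_vertical (f : C -> C) (x c d : R) : c <= d ->
  (forall y, c <= y <= d -> Ccontinuous f (x, y)) -> ex_CInt (fun y => f (x, y)) c d.
Proof.
  intros Hcd H; apply (ex_RInt_continuous (V := C_R_CompleteNormedModule)).
  intros z Hz; rewrite Rmin_left, Rmax_right in Hz by lra.
  apply Ccontinuous_vertical, H, Hz.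
Qed.

Definition on_rect_boundary (a b c d x y : R) : Prop :=
  (a <= x <= b /\ (y = c \/ y = d)) \/ (c <= y <= d /\ (x = a \/ x = b)).

Definition rect_integral (f : C -> C) (a b c d : R) : C :=
  (CInt (fun x => f (x, c)) a b + Ci * CInt (fun y => f (b, y)) c d
   - CInt (fun x => f (x, d)) a b - Ci * CInt (fun y => f (a, y)) c d)%C.

Definition rect_integrable (f : C -> C) (a b c d : R) : Prop :=
  ex_CInt (fun x => f (x, c)) a b /\ ex_CInt (fun x => f (x, d)) a b /\
  ex_CInt (fun y => f (a, y)) c d /\ ex_CInt (fun y => f (b, y)) c d.

Lemma rect_integrable_of_continuous (f : C -> C) (a b c d : R) : a <= b -> c <= d ->
  (forall x y, on_rect_boundary a b c d x y -> Ccontinuous f (x, y)) ->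
  rect_integrable f a b c d.
Proof.
  unfold on_rect_boundary; intros Hab Hcd H; repeat split;
    [apply ex_CInt_horizontal | apply ex_CInt_horizontal | apply ex_CInt_vertical | apply ex_CInt_vertical];
    auto; intros; apply H; tauto.
Qed.

Lemma rect_integrable_of_holo (f : C -> C) (a b c d : R) : a <= b -> c <= d ->
  (forall x y, on_rect_boundary a b c d x y -> holo_at f (x, y)) ->
  rect_integrable f a b c d.
Proof.
  intros Hab Hcd H; apply rect_integrable_of_continuous; auto.
  intros; apply holo_at_Ccontinuous, H; auto.
Qed.

Lemma rect_integrable_plus (f g : C -> C) (a b c d : R) :
  rect_integrable f a b c d -> rect_integrable g a b c d ->
  rect_integrable (fun w => f w + g w)%C a b c d.
Proof.
  intros [f1 [f2 [f3 f4]]] [g1 [g2 [g3 g4]]]; repeat split;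
    apply (ex_RInt_plus (V := C_R_NormedModule)); auto.
Qed.

Lemma rect_integrable_minus (f g : C -> C) (a b c d : R) :
  rect_integrable f a b c d -> rect_integrable g a b c d ->
  rect_integrable (fun w => f w - g w)%C a b c d.
Proof.
  intros [f1 [f2 [f3 f4]]] [g1 [g2 [g3 g4]]]; repeat split;
    apply (ex_RInt_minus (V := C_R_NormedModule)); auto.
Qed.

Lemma rect_integrable_scale (f : C -> C) (k : C) (a b c d : R) :
  rect_integrable f a b c d -> rect_integrable (fun w => k * f w)%C a b c d.
Proof. intros [f1 [f2 [f3 f4]]]; repeat split; apply ex_CInt_scale; auto. Qed.

Lemma rect_integral_plus (f g : C -> C) (a b c d : R) :
  rect_integrable f a b c d -> rect_integrable g a b c d ->
  rect_integral (fun w => f w + g w)%C a b c d = (rect_integral f a b c d + rect_integral g a b c d)%C.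
Proof.
  intros [f1 [f2 [f3 f4]]] [g1 [g2 [g3 g4]]]; unfold rect_integral.
  rewrite !CInt_plus by auto; ring.
Qed.

Lemma rect_integral_minus (f g : C -> C) (a b c d : R) :
  rect_integrable f a b c d -> rect_integrable g a b c d ->
  rect_integral (fun w => f w - g w)%C a b c d = (rect_integral f a b c d - rect_integral g a b c d)%C.
Proof.
  intros [f1 [f2 [f3 f4]]] [g1 [g2 [g3 g4]]]; unfold rect_integral.
  rewrite !CInt_minus by auto; ring.
Qed.

Lemma rect_integral_scale (f : C -> C) (k : C) (a b c d : R) :
  rect_integrable f a b c d ->
  rect_integral (fun w => k * f w)%C a b c d = (k * rect_integral f a b c d)%C.
Proof.
  intros [f1 [f2 [f3 f4]]]; unfold rect_integral.
  rewrite !CInt_scale by auto; ring.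
Qed.

Lemma rect_integral_ext (f g : C -> C) (a b c d : R) : a <= b -> c <= d ->
  (forall x y, on_rect_boundary a b c d x y -> f (x, y) = g (x, y)) ->
  rect_integral f a b c d = rect_integral g a b c d.
Proof.
  unfold on_rect_boundary; intros Hab Hcd H; unfold rect_integral.
  rewrite (RInt_ext (V := C_R_CompleteNormedModule) (fun x => f (x, c)) (fun x => g (x, c))),
          (RInt_ext (V := C_R_CompleteNormedModule) (fun x => f (x, d)) (fun x => g (x, d))),
          (RInt_ext (V := C_R_CompleteNormedModule) (fun y => f (a, y)) (fun y => g (a, y))),
          (RInt_ext (V := C_R_CompleteNormedModule) (fun y => f (b, y)) (fun y => g (b, y))); auto;
    intros t Ht; rewrite ?Rmin_left, ?Rmax_right in Ht by lra; apply H; lra.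
Qed.

Lemma rect_integral_split_x (f : C -> C) (a m b c d : R) : a <= m <= b -> c <= d ->
  (forall x y, on_rect_boundary a m c d x y -> Ccontinuous f (x, y)) ->
  (forall x y, on_rect_boundary m b c d x y -> Ccontinuous f (x, y)) ->
  rect_integral f a b c d = (rect_integral f a m c d + rect_integral f m b c d)%C.
Proof.
  intros Hm Hcd H1 H2.
  destruct (rect_integrable_of_continuous f a m c d ltac:(lra) Hcd H1) as [h1 [h2 _]].
  destruct (rect_integrable_of_continuous f m b c d ltac:(lra) Hcd H2) as [k1 [k2 _]].
  unfold rect_integral.
  rewrite (CInt_Chasles (fun x => f (x, c)) a m b), (CInt_Chasles (fun x => f (x, d)) a m b) by auto.
  ring.
Qed.

Lemma rect_integral_split_y (f : C -> C) (a b c m d : R) : a <= b -> c <= m <= d ->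
  (forall x y, on_rect_boundary a b c m x y -> Ccontinuous f (x, y)) ->
  (forall x y, on_rect_boundary a b m d x y -> Ccontinuous f (x, y)) ->
  rect_integral f a b c d = (rect_integral f a b c m + rect_integral f a b m d)%C.
Proof.
  intros Hab Hm H1 H2.
  destruct (rect_integrable_of_continuous f a b c m Hab ltac:(lra) H1) as [_ [_ [h3 h4]]].
  destruct (rect_integrable_of_continuous f a b m d Hab ltac:(lra) H2) as [_ [_ [k3 k4]]].
  unfold rect_integral.
  rewrite (CInt_Chasles (fun y => f (a, y)) c m d), (CInt_Chasles (fun y => f (b, y)) c m d) by auto.
  ring.
Qed.

Lemma Cmod_sum4_le (u v w z : C) :
  Cmod (u + v - w - z) <= Cmod u + Cmod v + Cmod w + Cmod z.
Proof.
  unfold Cminus; eapply Rle_trans; [apply Cmod_triangle |]; rewrite Cmod_opp.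
  apply Rplus_le_compat_r; eapply Rle_trans; [apply Cmod_triangle |]; rewrite Cmod_opp.
  apply Rplus_le_compat_r, Cmod_triangle.
Qed.

Lemma rect_integral_norm_le (f : C -> C) (a b c d M : R) : a <= b -> c <= d ->
  rect_integrable f a b c d ->
  (forall x y, on_rect_boundary a b c d x y -> Cmod (f (x, y)) <= M) ->
  Cmod (rect_integral f a b c d) <= 2 * M * ((b - a) + (d - c)).
Proof.
  unfold on_rect_boundary; intros Hab Hcd [h1 [h2 [h3 h4]]] HM; unfold rect_integral.
  eapply Rle_trans; [apply Cmod_sum4_le |]; rewrite !Cmod_mult, !Cmod_Ci, !Rmult_1_l.
  assert (Hhor : forall y, ex_CInt (fun x => f (x, y)) a b -> y = c \/ y = d ->
    Cmod (CInt (fun x => f (x, y)) a b) <= M * (b - a)) by (intros; apply CInt_norm_le; auto).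
  assert (Hver : forall x, ex_CInt (fun y => f (x, y)) c d -> x = a \/ x = b ->
    Cmod (CInt (fun y => f (x, y)) c d) <= M * (d - c)) by (intros; apply CInt_norm_le; auto).
  generalize (Hhor c h1 (or_introl eq_refl)) (Hhor d h2 (or_intror eq_refl))
    (Hver a h3 (or_introl eq_refl)) (Hver b h4 (or_intror eq_refl)); lra.
Qed.

Lemma Cmod_triang_inv2 (u v : C) : Rabs (Cmod u - Cmod v) <= Cmod (u - v).
Proof.
  apply Rabs_le; split; [rewrite Cmod_minus_sym |];
      [assert (X := Cmod_triang_inv v u) | assert (X := Cmod_triang_inv u v)]; lra.
Qed.

Lemma continuity_pt_Cmod_horizontal (f : C -> C) (x y : R) :
  Ccontinuous f (x, y) -> continuity_pt (fun t => Cmod (f (t, y))) x.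
Proof.
  intros H eps He; destruct (H eps He) as [d [Hd Hw]]; exists d; split; auto.
  intros t [_ Ht]; unfold dist in Ht; simpl in Ht; unfold R_dist in Ht.
  change (Rabs (Cmod (f (t, y)) - Cmod (f (x, y))) < eps).
  eapply Rle_lt_trans; [apply Cmod_triang_inv2 | apply Hw].
  replace ((t, y) - (x, y))%C with (RtoC (t - x)) by (apply injective_projections; simpl; ring).
  rewrite Cmod_R; auto.
Qed.

Lemma continuity_pt_Cmod_vertical (f : C -> C) (x y : R) :
  Ccontinuous f (x, y) -> continuity_pt (fun t => Cmod (f (x, t))) y.
Proof.
  intros H eps He; destruct (H eps He) as [d [Hd Hw]]; exists d; split; auto.
  intros t [_ Ht]; unfold dist in Ht; simpl in Ht; unfold R_dist in Ht.
  change (Rabs (Cmod (f (x, t)) - Cmod (f (x, y))) < eps).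
  eapply Rle_lt_trans; [apply Cmod_triang_inv2 | apply Hw].
  replace ((x, t) - (x, y))%C with (Ci * RtoC (t - y))%C by (apply injective_projections; simpl; ring).
  rewrite Cmod_mult, Cmod_Ci, Cmod_R, Rmult_1_l; auto.
Qed.

Lemma bounded_on_rect_boundary (f : C -> C) (a b c d : R) : a <= b -> c <= d ->
  (forall x y, on_rect_boundary a b c d x y -> Ccontinuous f (x, y)) ->
  exists M, forall x y, on_rect_boundary a b c d x y -> Cmod (f (x, y)) <= M.
Proof.
  unfold on_rect_boundary; intros Hab Hcd H.
  destruct (continuity_ab_maj (fun t => Cmod (f (t, c))) a b Hab) as [m1 [M1 _]];
    [intros; apply continuity_pt_Cmod_horizontal, H; auto |].
  destruct (continuity_ab_maj (fun t => Cmod (f (t, d))) a b Hab) as [m2 [M2 _]];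
    [intros; apply continuity_pt_Cmod_horizontal, H; auto |].
  destruct (continuity_ab_maj (fun t => Cmod (f (a, t))) c d Hcd) as [m3 [M3 _]];
    [intros; apply continuity_pt_Cmod_vertical, H; auto |].
  destruct (continuity_ab_maj (fun t => Cmod (f (b, t))) c d Hcd) as [m4 [M4 _]];
    [intros; apply continuity_pt_Cmod_vertical, H; auto |].
  exists (Rmax (Rmax (Cmod (f (m1, c))) (Cmod (f (m2, d)))) (Rmax (Cmod (f (a, m3))) (Cmod (f (b, m4))))).
  intros x y [[Hx [-> | ->]] | [Hy [-> | ->]]];
    [specialize (M1 x Hx) | specialize (M2 x Hx) | specialize (M3 y Hy) | specialize (M4 y Hy)];
    Rmax_bounds; lra.
Qed.

Lemma is_derive_horizontal (G : C -> C) (x y : R) (l : C) :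
  is_Cderive G (x, y) l -> @is_derive R_AbsRing C_R_NormedModule (fun t => G (t, y)) x l.
Proof.
  intros D; split; [apply is_linear_scal_l |].
  intros x0 Hx0; apply (is_filter_lim_locally_unique (K := R_AbsRing) (V := R_NormedModule)) in Hx0;
      subst x0.
  intros eps; destruct (is_Cderive_approx G _ l D eps (cond_pos eps)) as [d [Hd Hw]].
  exists (mkposreal d Hd); intros t Ht; change (Rabs (t - x) < d) in Ht.
  assert (E : ((t, y) - (x, y))%C = RtoC (t - x)) by (apply injective_projections; simpl; ring).
  specialize (Hw (t, y)); rewrite E, Cmod_R in Hw; specialize (Hw Ht).
  rewrite norm_C; change (norm (minus t x)) with (Rabs (t - x)).
  eapply Rle_trans; [right; apply (f_equal Cmod) | exact Hw].
  apply injective_projections; simpl; unfold plus, opp, scal, minus; simpl;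
    unfold prod_plus, prod_opp, prod_scal; simpl; unfold plus, opp, mult; simpl; ring.
Qed.

Lemma is_derive_vertical (G : C -> C) (x y : R) (l : C) :
  is_Cderive G (x, y) l -> @is_derive R_AbsRing C_R_NormedModule (fun t => G (x, t)) y (Ci * l)%C.
Proof.
  intros D; split; [apply is_linear_scal_l |].
  intros y0 Hy0; apply (is_filter_lim_locally_unique (K := R_AbsRing) (V := R_NormedModule)) in Hy0;
      subst y0.
  intros eps; destruct (is_Cderive_approx G _ l D eps (cond_pos eps)) as [d [Hd Hw]].
  exists (mkposreal d Hd); intros t Ht; change (Rabs (t - y) < d) in Ht.
  assert (E : ((x, t) - (x, y))%C = (Ci * RtoC (t - y))%C) by (apply injective_projections; simpl; ring).
  assert (E2 : Cmod ((x, t) - (x, y)) = Rabs (t - y)) by (rewrite E, Cmod_mult, Cmod_Ci, Cmod_R; ring).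
  specialize (Hw (x, t)); rewrite E2 in Hw; specialize (Hw Ht); rewrite E in Hw.
  rewrite norm_C; change (norm (minus t y)) with (Rabs (t - y)).
  eapply Rle_trans; [right; apply (f_equal Cmod) | exact Hw].
  apply injective_projections; simpl; unfold plus, opp, scal, minus; simpl;
    unfold prod_plus, prod_opp, prod_scal; simpl; unfold plus, opp, mult; simpl; ring.
Qed.

Lemma Ccontinuous_scale (g : C -> C) (k z : C) : Ccontinuous g z -> Ccontinuous (fun w => k * g w)%C z.
Proof.
  intros H eps He; destruct (H (eps / (Cmod k + 1))) as [d [Hd Hw]].
  { apply Rdiv_lt_0_compat; [lra |]; assert (X := Cmod_ge_0 k); lra. }
  exists d; split; auto; intros w Hwz.
  replace (k * g w - k * g z)%C with (k * (g w - g z))%C by ring.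
  rewrite Cmod_mult; specialize (Hw w Hwz).
  assert (Hk := Cmod_ge_0 k); assert (X := Cmod_ge_0 (g w - g z)).
  apply Rle_lt_trans with ((Cmod k + 1) * Cmod (g w - g z)); [nra |].
  apply Rlt_le_trans with ((Cmod k + 1) * (eps / (Cmod k + 1))); [apply Rmult_lt_compat_l; lra |].
  right; field; lra.
Qed.

Lemma CInt_horizontal_derive (G g : C -> C) (a b y : R) : a <= b ->
  (forall x, a <= x <= b -> is_Cderive G (x, y) (g (x, y)) /\ Ccontinuous g (x, y)) ->
  CInt (fun x => g (x, y)) a b = (G (b, y) - G (a, y))%C.
Proof.
  intros Hab H; apply (is_RInt_unique (V := C_R_CompleteNormedModule)).
  apply (is_RInt_derive (V := C_R_CompleteNormedModule) (fun t => G (t, y)) (fun t => g (t, y)));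
    intros t Ht; rewrite Rmin_left, Rmax_right in Ht by lra.
  - apply is_derive_horizontal, H; lra.
  - apply Ccontinuous_horizontal, H; lra.
Qed.

Lemma CInt_vertical_derive (G g : C -> C) (x c d : R) : c <= d ->
  (forall y, c <= y <= d -> is_Cderive G (x, y) (g (x, y)) /\ Ccontinuous g (x, y)) ->
  (Ci * CInt (fun y => g (x, y)) c d)%C = (G (x, d) - G (x, c))%C.
Proof.
  intros Hcd H.
  rewrite <- CInt_scale by (apply ex_CInt_vertical; auto; intros; apply H; auto).
  apply (is_RInt_unique (V := C_R_CompleteNormedModule)).
  apply (is_RInt_derive (V := C_R_CompleteNormedModule) (fun t => G (x, t)) (fun t => Ci * g (x, t))%C);
    intros t Ht; rewrite Rmin_left, Rmax_right in Ht by lra.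
  - apply is_derive_vertical, H; lra.
  - apply (Ccontinuous_vertical (fun w => Ci * g w)%C), Ccontinuous_scale, H; lra.
Qed.

Lemma rect_integral_derive_zero (G g : C -> C) (a b c d : R) : a <= b -> c <= d ->
  (forall x y, on_rect_boundary a b c d x y -> is_Cderive G (x, y) (g (x, y)) /\ Ccontinuous g (x, y)) ->
  rect_integral g a b c d = 0.
Proof.
  unfold on_rect_boundary; intros Hab Hcd H; unfold rect_integral.
  rewrite (CInt_horizontal_derive G g a b c), (CInt_horizontal_derive G g a b d),
    (CInt_vertical_derive G g a c d), (CInt_vertical_derive G g b c d) by (auto; intros; apply H; tauto).
  ring.
Qed.

Lemma RtoC_INR_S_neq_0 (n : nat) : RtoC (INR (S n)) <> 0.
Proof. intro E; apply (not_0_INR (S n)); [discriminate | now injection E]. Qed.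

Lemma rect_integral_pown (s : C) (n : nat) (a b c d : R) : a <= b -> c <= d ->
  rect_integral (fun w => Cpown (w - s) n) a b c d = 0.
Proof.
  intros Hab Hcd.
  apply (rect_integral_derive_zero (fun w => / INR (S n) * Cpown (w - s) (S n))%C); auto.
  intros x y _; split.
  - eapply is_Cderive_value; [| apply is_Cderive_scale, is_Cderive_pown, is_Cderive_sub_const].
    cbv beta; field; apply RtoC_INR_S_neq_0.
  - apply holo_at_Ccontinuous, holo_at_pown, holo_at_sub_const.
Qed.

Lemma rect_integral_inv_pown (s : C) (n : nat) (a b c d : R) : a <= b -> c <= d ->
  (forall x y, on_rect_boundary a b c d x y -> (x, y) <> s) ->
  rect_integral (fun w => Cpown (/ (w - s)) (S (S n))) a b c d = 0.
Proof.
  intros Hab Hcd Hs.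
  apply (rect_integral_derive_zero (fun w => - / INR (S n) * Cpown (/ (w - s)) (S n))%C); auto.
  intros x y Hxy; assert (Hz := Cminus_eq_contra _ _ (Hs x y Hxy)); split.
  - eapply is_Cderive_value;
      [| apply is_Cderive_scale, is_Cderive_pown, is_Cderive_inv; [apply is_Cderive_sub_const | auto]].
    cbv beta; change (Cpown (/ ((x, y) - s)) (S (S n)))
      with (/ ((x, y) - s) * (/ ((x, y) - s) * Cpown (/ ((x, y) - s)) n))%C.
    field; split; try apply RtoC_INR_S_neq_0; auto.
  - apply holo_at_Ccontinuous, holo_at_pown, holo_at_inv_sub, Hs, Hxy.
Qed.

Lemma nested_intervals (A B : nat -> R) :
  Un_growing A -> (forall n, B (S n) <= B n) -> (forall n, A n <= B n) ->
  exists x, forall n, A n <= x <= B n.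
Proof.
  intros HA HB HAB.
  assert (HBm : forall m n, (m <= n)%nat -> B n <= B m).
  { intros m n Hmn; induction Hmn; [lra | specialize (HB m0); lra]. }
  assert (HAB' : forall m n, A m <= B n).
  { intros m n; destruct (le_ge_dec m n) as [H | H].
    - apply Rle_trans with (A n); [apply tech9; auto | apply HAB].
    - apply Rle_trans with (B m); [apply HAB | apply HBm; auto]. }
  destruct (growing_cv A HA) as [x Hx]; [exists (B O); intros t [n ->]; apply HAB' |].
  exists x; intros n; split; [apply growing_ineq; auto |].
  apply Rnot_lt_le; intros Hlt.
  destruct (Hx (x - B n)) as [N HN]; [lra |].
  specialize (HN N (Nat.le_refl N)); unfold Rdist in HN; specialize (HAB' N n).
  assert (A N <= x) by (apply growing_ineq; auto).
  rewrite Rabs_left1 in HN; lra.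
Qed.

Lemma Cmod_add4_le (u v w z : C) : Cmod (u + v + (w + z)) <= Cmod u + Cmod v + Cmod w + Cmod z.
Proof.
  eapply Rle_trans; [apply Cmod_triangle |].
  assert (H1 := Cmod_triangle u v); assert (H2 := Cmod_triangle w z); lra.
Qed.

Record box : Type := Box { box_a : R; box_b : R; box_c : R; box_d : R }.

Definition box_integral (f : C -> C) (r : box) : C :=
  rect_integral f (box_a r) (box_b r) (box_c r) (box_d r).

Lemma select_quarter (P : box -> Prop) (v : box -> R) (m : R) (q1 q2 q3 q4 : box) :
  P q1 -> P q2 -> P q3 -> P q4 -> 4 * m <= v q1 + v q2 + v q3 + v q4 ->
  let q := if Rle_dec m (v q1) then q1 else if Rle_dec m (v q2) then q2
           else if Rle_dec m (v q3) then q3 else q4 in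
  P q /\ m <= v q.
Proof.
  intros H1 H2 H3 H4 Hsum; cbv zeta.
  repeat destruct Rle_dec as [? | ?%Rnot_le_lt]; split; auto; lra.
Qed.

Definition quadrant (f : C -> C) (r : box) : box :=
  let (a, b, c, d) := r in
  let mx := (a + b) / 2 in let my := (c + d) / 2 in
  let m := Cmod (rect_integral f a b c d) / 4 in
  let v := fun q => Cmod (box_integral f q) in
  if Rle_dec m (v (Box a mx c my)) then Box a mx c my
  else if Rle_dec m (v (Box mx b c my)) then Box mx b c my
  else if Rle_dec m (v (Box a mx my d)) then Box a mx my d
  else Box mx b my d.

Lemma quadrant_spec (f : C -> C) (a b c d : R) : a <= b -> c <= d ->
  (forall x y, a <= x <= b -> c <= y <= d -> Ccontinuous f (x, y)) ->
  let r := quadrant f (Box a b c d) in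
  a <= box_a r /\ box_b r <= b /\ c <= box_c r /\ box_d r <= d /\
  box_b r - box_a r = (b - a) / 2 /\ box_d r - box_c r = (d - c) / 2 /\
  Cmod (rect_integral f a b c d) / 4 <= Cmod (box_integral f r).
Proof.
  intros Hab Hcd Hf; set (mx := (a + b) / 2); set (my := (c + d) / 2).
  assert (Hcont : forall a' b' c' d', a <= a' <= b' -> b' <= b -> c <= c' <= d' -> d' <= d ->
    forall x y, on_rect_boundary a' b' c' d' x y -> Ccontinuous f (x, y)).
  { intros a' b' c' d' ? ? ? ? x y Hxy; apply Hf; destruct Hxy as [[? [-> | ->]] | [? [-> | ->]]]; lra. }
  assert (E : rect_integral f a b c d =
    (rect_integral f a mx c my + rect_integral f mx b c my +
     (rect_integral f a mx my d + rect_integral f mx b my d))%C).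
  { rewrite (rect_integral_split_y f a b c my d), (rect_integral_split_x f a mx b c my),
      (rect_integral_split_x f a mx b my d) by (unfold mx, my; try apply Hcont; lra).
    ring. }
  assert (X := Cmod_add4_le (rect_integral f a mx c my) (rect_integral f mx b c my)
    (rect_integral f a mx my d) (rect_integral f mx b my d)); rewrite <- E in X.
  destruct (select_quarter (fun q => a <= box_a q /\ box_b q <= b /\ c <= box_c q /\ box_d q <= d /\
      box_b q - box_a q = (b - a) / 2 /\ box_d q - box_c q = (d - c) / 2)
    (fun q => Cmod (box_integral f q)) (Cmod (rect_integral f a b c d) / 4)
    (Box a mx c my) (Box mx b c my) (Box a mx my d) (Box mx b my d)) as [HP Hm];
    [unfold mx, my; simpl; lra .. | unfold box_integral; simpl; lra |].
  destruct HP as (? & ? & ? & ? & ? & ?); repeat split; auto.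
Qed.

Arguments quadrant : simpl never.

Fixpoint quadrants (f : C -> C) (r : box) (n : nat) : box :=
  match n with O => r | S n => quadrant f (quadrants f r n) end.

Lemma quadrants_spec (f : C -> C) (a b c d : R) : a <= b -> c <= d ->
  (forall x y, a <= x <= b -> c <= y <= d -> Ccontinuous f (x, y)) ->
  forall n, let r := quadrants f (Box a b c d) n in
  a <= box_a r /\ box_a r <= box_b r /\ box_b r <= b /\
  c <= box_c r /\ box_c r <= box_d r /\ box_d r <= d /\
  box_b r - box_a r = (b - a) / 2 ^ n /\ box_d r - box_c r = (d - c) / 2 ^ n /\
  Cmod (rect_integral f a b c d) / 4 ^ n <= Cmod (box_integral f r) /\
  box_a r <= box_a (quadrant f r) /\ box_b (quadrant f r) <= box_b r /\
  box_c r <= box_c (quadrant f r) /\ box_d (quadrant f r) <= box_d r.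
Proof.
  intros Hab Hcd Hf n; induction n as [| n IH]; simpl in *.
  - destruct (quadrant_spec f a b c d Hab Hcd Hf) as [? [? [? [? [? [? ?]]]]]].
    unfold box_integral; simpl; repeat split; lra.
  - set (r := quadrants f (Box a b c d) n) in *.
    destruct IH as [I1 [I2 [I3 [I4 [I5 [I6 [I7 [I8 [I9 _]]]]]]]]].
    assert (Hsub : forall x y, box_a r <= x <= box_b r -> box_c r <= y <= box_d r -> Ccontinuous f (x, y))
      by (intros; apply Hf; lra).
    destruct r as [a' b' c' d']; simpl in *.
    destruct (quadrant_spec f a' b' c' d' I2 I5 Hsub) as [S1 [S2 [S3 [S4 [S5 [S6 S7]]]]]].
    set (r' := quadrant f (Box a' b' c' d')) in *.
    assert (Hsub' : forall x y,
        box_a r' <= x <= box_b r' -> box_c r' <= y <= box_d r' -> Ccontinuous f (x, y))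
      by (intros; apply Hf; lra).
    destruct r' as [a'' b'' c'' d'']; simpl in *.
    destruct (quadrant_spec f a'' b'' c'' d'' ltac:(lra) ltac:(lra) Hsub') as [T1 [T2 [T3 [T4 _]]]].
    assert (P2 : 0 < 2 ^ n) by (apply pow_lt; lra); assert (P4 : 0 < 4 ^ n) by (apply pow_lt; lra).
    repeat split; try lra.
    + rewrite S5, I7; field; lra.
    + rewrite S6, I8; field; lra.
    + apply Rle_trans with (Cmod (rect_integral f a' b' c' d') / 4); [| exact S7].
      replace (Cmod (rect_integral f a b c d) / (4 * 4 ^ n))
        with (Cmod (rect_integral f a b c d) / 4 ^ n / 4) by (field; lra).
      unfold Rdiv at 1 2; apply Rmult_le_compat_r; [lra | exact I9].
Qed.

Lemma rect_integral_linear_approx (f : C -> C) (l : C) (x0 y0 a b c d eps dl : R) :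
  a <= x0 <= b -> c <= y0 <= d -> 0 <= eps -> (b - a) + (d - c) < dl ->
  (forall x y, on_rect_boundary a b c d x y -> Ccontinuous f (x, y)) ->
  (forall w, Cmod (w - (x0, y0)) < dl ->
     Cmod (f w - f (x0, y0) - l * (w - (x0, y0))) <= eps * Cmod (w - (x0, y0))) ->
  Cmod (rect_integral f a b c d) <= 2 * eps * ((b - a) + (d - c)) ^ 2.
Proof.
  intros Hx Hy Heps Hdl Hc Happrox; set (z0 := (x0, y0)) in *; set (D := (b - a) + (d - c)) in *.
  assert (Hf : rect_integrable f a b c d) by (apply rect_integrable_of_continuous; auto; lra).
  assert (Hpow : forall k, rect_integrable (fun w => Cpown (w - z0) k) a b c d).
  { intros k; apply rect_integrable_of_holo; try lra; intros; apply holo_at_pown, holo_at_sub_const. }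
  replace (rect_integral f a b c d) with
    (rect_integral (fun w => f w - f z0 * Cpown (w - z0) 0 - l * Cpown (w - z0) 1)%C a b c d).
  2:{ rewrite !rect_integral_minus, !rect_integral_scale, !rect_integral_pown
        by (auto using rect_integrable_minus, rect_integrable_scale; lra).
      ring. }
  replace (2 * eps * D ^ 2) with (2 * (eps * D) * ((b - a) + (d - c))) by (unfold D; ring).
  apply rect_integral_norm_le; try lra.
  - apply rect_integrable_minus; [apply rect_integrable_minus; auto |]; apply rect_integrable_scale; auto.
  - intros x y Hxy; simpl Cpown.
    assert (Hdist : Cmod ((x, y) - z0) <= D).
    { replace ((x, y) - z0)%C with (x - x0, y - y0) by (apply injective_projections; simpl; ring).
      eapply Rle_trans; [apply Cmod_pair_le |]; unfold D.
      apply Rplus_le_compat; apply Rabs_le; destruct Hxy as [[? [-> | ->]] | [? [-> | ->]]]; lra. }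
    replace (f (x, y) - f z0 * 1 - l * (((x, y) - z0) * 1))%C
      with (f (x, y) - f z0 - l * ((x, y) - z0))%C by ring.
    eapply Rle_trans; [apply Happrox; lra |]; apply Rmult_le_compat_l; auto.
Qed.

Lemma pow2_unbounded (x : R) : exists n : nat, x < 2 ^ n.
Proof.
  destruct (Pow_x_infinity 2 ltac:(rewrite Rabs_right; lra) (x + 1)) as [N HN].
  exists N; specialize (HN N (Nat.le_refl N)); rewrite Rabs_right in HN; [lra |].
  apply Rle_ge, pow_le; lra.
Qed.

Lemma quadrants_common_point (f : C -> C) (a b c d : R) : a <= b -> c <= d ->
  (forall x y, a <= x <= b -> c <= y <= d -> Ccontinuous f (x, y)) ->
  exists x0 y0, forall n, let r := quadrants f (Box a b c d) n in
    box_a r <= x0 <= box_b r /\ box_c r <= y0 <= box_d r.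
Proof.
  intros Hab Hcd Hc; pose proof (quadrants_spec f a b c d Hab Hcd Hc) as Q; cbv zeta in Q.
  set (r := quadrants f (Box a b c d)) in Q.
  destruct (nested_intervals (fun n => box_a (r n)) (fun n => box_b (r n))) as [x0 Hx0];
    [intros n; apply Q .. |].
  destruct (nested_intervals (fun n => box_c (r n)) (fun n => box_d (r n))) as [y0 Hy0];
    [intros n; apply Q .. |].
  exists x0, y0; intros n; split; [apply Hx0 | apply Hy0].
Qed.

Theorem rect_integral_holo_zero (f : C -> C) (a b c d : R) : a <= b -> c <= d ->
  (forall x y, a <= x <= b -> c <= y <= d -> holo_at f (x, y)) ->
  rect_integral f a b c d = 0.
Proof.
  intros Hab Hcd Hf.
  assert (Hc : forall x y, a <= x <= b -> c <= y <= d -> Ccontinuous f (x, y))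
    by (intros; apply holo_at_Ccontinuous, Hf; auto).
  pose proof (quadrants_spec f a b c d Hab Hcd Hc) as Q; cbv zeta in Q.
  destruct (quadrants_common_point f a b c d Hab Hcd Hc) as [x0 [y0 Hz0]]; cbv zeta in Hz0.
  set (r := quadrants f (Box a b c d)) in Q, Hz0.
  destruct (proj1 (holo_at_iff f (x0, y0))) as [l Hl]; [destruct (Q O), (Hz0 O); apply Hf; lra |].
  set (D := (b - a) + (d - c)); set (I := Cmod (rect_integral f a b c d)).
  apply Cmod_eq_0, Rle_antisym; [| apply Cmod_ge_0]; apply Rnot_lt_le; intros Hpos; fold I in Hpos.
  assert (HD : 0 <= D) by (unfold D; lra).
  set (eps := I / (4 * (D * D + 1))).
  assert (Heps : 0 < eps) by (unfold eps; apply Rdiv_lt_0_compat; nra).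
  destruct (is_Cderive_approx f _ l Hl eps Heps) as [dl [Hdl Hw]].
  destruct (pow2_unbounded (D / dl)) as [n Hn].
  assert (P2 : 0 < 2 ^ n) by (apply pow_lt; lra).
  assert (HDn : D / 2 ^ n < dl).
  { apply (Rmult_lt_reg_r (2 ^ n / dl)); [apply Rdiv_lt_0_compat; lra |].
    replace (D / 2 ^ n * (2 ^ n / dl)) with (D / dl) by (field; lra).
    replace (dl * (2 ^ n / dl)) with (2 ^ n) by (field; lra); exact Hn. }
  destruct (Q n) as [I1 [I2 [I3 [I4 [I5 [I6 [I7 [I8 [I9 _]]]]]]]]]; destruct (Hz0 n) as [Hx0 Hy0].
  assert (Hsmall : Cmod (box_integral f (r n)) <= 2 * eps * (D / 2 ^ n) ^ 2).
  { unfold box_integral; destruct (r n) as [a' b' c' d']; simpl in *.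
    replace (D / 2 ^ n) with ((b' - a') + (d' - c')) by (rewrite I7, I8; unfold D; field; lra).
    apply (rect_integral_linear_approx f l x0 y0 _ _ _ _ eps dl); try lra; [| | exact Hw].
    - rewrite I7, I8; replace ((b - a) / 2 ^ n + (d - c) / 2 ^ n) with (D / 2 ^ n) by
        (unfold D; field; lra); lra.
    - intros x y Hxy; apply Hc; destruct Hxy as [[? [-> | ->]] | [? [-> | ->]]]; lra. }
  assert (Hbig : I <= 2 * eps * D * D).
  { assert (P4 : 4 ^ n = 2 ^ n * 2 ^ n) by (rewrite <- Rpow_mult_distr; f_equal; lra).
    apply (Rmult_le_reg_r (/ 4 ^ n)); [apply Rinv_0_lt_compat, pow_lt; lra |].
    eapply Rle_trans; [apply I9 |]; eapply Rle_trans; [apply Hsmall |].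
    right; rewrite P4; field; lra. }
  assert (2 * eps * D * D <= I / 2).
  { unfold eps; replace (2 * (I / (4 * (D * D + 1))) * D * D) with (I / 2 * (D * D / (D * D + 1))) by
      (field; nra).
    rewrite <- (Rmult_1_r (I / 2)) at 2; apply Rmult_le_compat_l; [lra |].
    apply (Rmult_le_reg_r (D * D + 1)); [nra |]; unfold Rdiv; rewrite Rmult_assoc, Rinv_l by nra; nra. }
  lra.
Qed.

Lemma rect_integral_hole (f : C -> C) (a b c d a' b' c' d' : R) :
  a <= a' <= b' -> b' <= b -> c <= c' <= d' -> d' <= d ->
  (forall x y, a <= x <= b -> c <= y <= d -> ~ (a' < x < b' /\ c' < y < d') -> holo_at f (x, y)) ->
  rect_integral f a b c d = rect_integral f a' b' c' d'.
Proof.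
  intros Ha Hb Hc Hd H.
  assert (Hbd : forall a0 b0 c0 d0, a <= a0 <= b0 -> b0 <= b -> c <= c0 <= d0 -> d0 <= d ->
    (forall x y, on_rect_boundary a0 b0 c0 d0 x y -> ~ (a' < x < b' /\ c' < y < d')) ->
    forall x y, on_rect_boundary a0 b0 c0 d0 x y -> Ccontinuous f (x, y)).
  { intros a0 b0 c0 d0 ? ? ? ? Hn x y Hxy; apply holo_at_Ccontinuous, H; auto;
      destruct Hxy as [[? [-> | ->]] | [? [-> | ->]]]; lra. }
  assert (Hzero : forall a0 b0 c0 d0, a <= a0 <= b0 -> b0 <= b -> c <= c0 <= d0 -> d0 <= d ->
    (forall x y, a0 <= x <= b0 -> c0 <= y <= d0 -> ~ (a' < x < b' /\ c' < y < d')) ->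
    rect_integral f a0 b0 c0 d0 = 0).
  { intros a0 b0 c0 d0 ? ? ? ? Hn; apply rect_integral_holo_zero; try lra.
    intros x y Hx Hy; apply H; try lra; apply Hn; auto. }
  rewrite (rect_integral_split_x f a a' b c d), (rect_integral_split_x f a' b' b c d),
    (rect_integral_split_y f a' b' c c' d), (rect_integral_split_y f a' b' c' d' d)
    by (try lra; apply Hbd; try lra; intros x y Hxy [? ?];
        destruct Hxy as [[? [-> | ->]] | [? [-> | ->]]]; lra).
  rewrite (Hzero a a' c d), (Hzero b' b c d), (Hzero a' b' c c'), (Hzero a' b' d' d)
    by (try lra; intros x y ? ? [? ?]; lra).
  ring.
Qed.

Lemma is_CInt_inv_horizontal (q p e : R) : p <> 0 ->
  is_CInt (fun x => Cinv (x - q, p)) (q - e) (q + e) (0, - (2 * atan (e / p))).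
Proof.
  intros Hp.
  assert (Hpos : forall t, 0 < (t - q) * (t - q) + p * p).
  { intros t; assert (0 < p * p) by (apply (Rsqr_pos_lt p); auto).
    assert (0 <= (t - q) * (t - q)) by apply (Rle_0_sqr (t - q)); lra. }
  apply (is_RInt_fct_extend_pair (U := R_NormedModule) (V := R_NormedModule)); simpl.
  - apply is_RInt_ext with (fun t => (t - q) / ((t - q) * (t - q) + p * p)).
    { intros t _; simpl; field; specialize (Hpos t); lra. }
    replace 0 with (minus ((fun t => ln ((t - q) * (t - q) + p * p) / 2) (q + e))
                          ((fun t => ln ((t - q) * (t - q) + p * p) / 2) (q - e))).
    2:{ simpl; unfold minus, plus, opp; simpl.
        replace ((q + e - q) * (q + e - q) + p * p) with ((q - e - q) * (q - e - q) + p * p) by ring.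
        ring. }
    apply (is_RInt_derive (V := R_CompleteNormedModule) (fun t => ln ((t - q) * (t - q) + p * p) / 2));
        intros t _.
    + auto_derive; [specialize (Hpos t); lra |].
      specialize (Hpos t); field; lra.
    + apply (ex_derive_continuous (K := R_AbsRing) (V := R_NormedModule)).
      auto_derive; specialize (Hpos t); lra.
  - apply is_RInt_ext with (fun t => - p / ((t - q) * (t - q) + p * p)).
    { intros t _; simpl; field; specialize (Hpos t); lra. }
    replace (- (2 * atan (e / p))) with (minus ((fun t => - atan ((t - q) / p)) (q + e))
                                               ((fun t => - atan ((t - q) / p)) (q - e))).
    2:{ simpl; unfold minus, plus, opp; simpl.
        replace ((q - e - q) / p) with (- (e / p)) by (field; auto).
        replace ((q + e - q) / p) with (e / p) by (field; auto).
        rewrite atan_opp; ring. }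
    apply (is_RInt_derive (V := R_CompleteNormedModule) (fun t => - atan ((t - q) / p))); intros t _.
    + auto_derive; [auto |].
      specialize (Hpos t); field; split; auto; lra.
    + apply (ex_derive_continuous (K := R_AbsRing) (V := R_NormedModule)).
      auto_derive; specialize (Hpos t); lra.
Qed.

Lemma is_CInt_inv_vertical (q p e : R) : p <> 0 ->
  is_CInt (fun y => Cinv (p, y - q)) (q - e) (q + e) (2 * atan (e / p), 0).
Proof.
  intros Hp.
  replace (2 * atan (e / p), 0) with (- Ci * (0, (- (2 * atan (e / - p)))%R))%C.
  2:{ replace (e / - p) with (- (e / p)) by (field; auto); rewrite atan_opp.
      apply injective_projections; simpl; ring. }
  eapply is_RInt_ext; [| apply is_CInt_scale, is_CInt_inv_horizontal; lra].
  intros t _; cbv beta; replace (t - q, - p) with (- Ci * (p, (t - q)%R))%C by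
      (apply injective_projections; simpl; ring).
  rewrite Cinv_mult; replace (/ - Ci)%C with Ci by (apply injective_projections; simpl; field).
  apply injective_projections; simpl; ring.
Qed.

Definition two_pi_i : C := (RtoC (2 * PI) * Ci)%C.

Definition square_integral (f : C -> C) (s : C) (e : R) : C :=
  rect_integral f (fst s - e) (fst s + e) (snd s - e) (snd s + e).

Lemma square_integral_inv (s : C) (e : R) : 0 < e ->
  square_integral (fun w => / (w - s))%C s e = two_pi_i.
Proof.
  intros He; destruct s as [sx sy]; unfold square_integral, rect_integral; simpl.
  assert (Hor : forall y, y - sy <> 0 ->
    CInt (fun x => / ((x, y) - (sx, sy)))%C (sx - e) (sx + e) = (0, - (2 * atan (e / (y - sy))))).
  { intros y Hy; apply (is_RInt_unique (V := C_R_CompleteNormedModule)).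
    eapply is_RInt_ext; [| apply (is_CInt_inv_horizontal sx (y - sy) e Hy)]; reflexivity. }
  assert (Ver : forall x, x - sx <> 0 ->
    CInt (fun y => / ((x, y) - (sx, sy)))%C (sy - e) (sy + e) = (2 * atan (e / (x - sx)), 0)).
  { intros x Hx; apply (is_RInt_unique (V := C_R_CompleteNormedModule)).
    eapply is_RInt_ext; [| apply (is_CInt_inv_vertical sy (x - sx) e Hx)]; reflexivity. }
  rewrite (Hor (sy - e)), (Hor (sy + e)), (Ver (sx + e)), (Ver (sx - e)) by lra.
  replace (sy - e - sy) with (- e) by ring; replace (sy + e - sy) with e by ring.
  replace (sx - e - sx) with (- e) by ring; replace (sx + e - sx) with e by ring.
  replace (e / - e) with (Ropp 1) by (field; lra); replace (e / e) with 1 by (field; lra).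
  rewrite atan_opp, atan_1; unfold two_pi_i; apply injective_projections; simpl; field.
Qed.

Lemma square_boundary_dist (s : C) (e x y : R) : 0 < e ->
  on_rect_boundary (fst s - e) (fst s + e) (snd s - e) (snd s + e) x y ->
  e <= Cmod ((x, y) - s) <= 2 * e.
Proof.
  destruct s as [sx sy]; simpl; intros He H.
  replace ((x, y) - (sx, sy))%C with (x - sx, y - sy) by (apply injective_projections; simpl; ring).
  split.
  - destruct H as [[_ [-> | ->]] | [_ [-> | ->]]];
      [eapply Rle_trans; [| apply (Cmod_snd (x - sx, sy - e - sy))]
      | eapply Rle_trans; [| apply (Cmod_snd (x - sx, sy + e - sy))]
      | eapply Rle_trans; [| apply (Cmod_fst (sx - e - sx, y - sy))]
      | eapply Rle_trans; [| apply (Cmod_fst (sx + e - sx, y - sy))]];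
      simpl; [rewrite Rabs_left1 | rewrite Rabs_right | rewrite Rabs_left1 | rewrite Rabs_right]; lra.
  - eapply Rle_trans; [apply Cmod_pair_le |].
    assert (Rabs (x - sx) <= e) by (apply Rabs_le; destruct H as [[? [-> | ->]] | [? [-> | ->]]]; lra).
    assert (Rabs (y - sy) <= e) by (apply Rabs_le; destruct H as [[? [-> | ->]] | [? [-> | ->]]]; lra).
    lra.
Qed.

Lemma rect_integral_shrink_square (f : C -> C) (a b c d : R) (z : C) (e : R) :
  0 < e -> a <= fst z - e -> fst z + e <= b -> c <= snd z - e -> snd z + e <= d ->
  (forall x y, a <= x <= b -> c <= y <= d -> (x, y) <> z -> holo_at f (x, y)) ->
  rect_integral f a b c d = square_integral f z e.
Proof.
  intros He Ha Hb Hc Hd H; unfold square_integral; apply rect_integral_hole; try lra.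
  intros x y Hx Hy Hn; apply H; auto; destruct z as [zx zy]; simpl in *.
  intros E; injection E; intros -> ->; apply Hn; lra.
Qed.

Lemma Cmod_small_eq_0 (Z : C) (K e0 : R) : 0 < e0 ->
  (forall e, 0 < e < e0 -> Cmod Z <= K * e) -> Z = 0.
Proof.
  intros He0 H; apply Cmod_eq_0, Rle_antisym; [| apply Cmod_ge_0]; apply Rnot_lt_le; intros Hp.
  set (e := Rmin (e0 / 2) (Cmod Z / (2 * (Rabs K + 1)))).
  assert (HK := Rabs_pos K); assert (HK' := Rle_abs K).
  assert (He : 0 < e) by (apply Rmin_glb_lt; [lra | apply Rdiv_lt_0_compat; lra]).
  assert (He1 : e <= e0 / 2) by apply Rmin_l.
  assert (He2 : e * (2 * (Rabs K + 1)) <= Cmod Z).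
  { apply (Rmult_le_reg_r (/ (2 * (Rabs K + 1)))); [apply Rinv_0_lt_compat; lra |].
    rewrite Rmult_assoc, Rinv_r, Rmult_1_r by lra; apply Rmin_r. }
  specialize (H e ltac:(lra)); nra.
Qed.

Lemma exists_pos_lower_bound (l : list R) :
  (forall x, In x l -> 0 < x) -> exists e, 0 < e /\ forall x, In x l -> e <= x.
Proof.
  induction l as [| x l IH]; intros H; [exists 1; split; [lra | intros x []] |].
  destruct IH as [e [He Hl]]; [intros; apply H; right; auto |].
  exists (Rmin e x); split; [apply Rmin_glb_lt; auto; apply H; left; auto |].
  intros y [<- | Hy]; [apply Rmin_r | eapply Rle_trans; [apply Rmin_l | auto]].
Qed.

Lemma difference_quotient_bound (f : C -> C) (z l w : C) :
  Cmod (f w - f z - l * (w - z)) <= 1 * Cmod (w - z) -> w <> z ->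
  Cmod ((f w - f z) * / (w - z)) <= 1 + Cmod l.
Proof.
  intros H Hw; assert (Hwz := proj1 (Cmod_gt_0 _) (Cminus_eq_contra _ _ Hw)).
  rewrite Cmod_mult, Cmod_inv by (apply Cminus_eq_contra; auto).
  apply (Rmult_le_reg_r (Cmod (w - z))); auto.
  rewrite Rmult_assoc, Rinv_l, Rmult_1_r by lra.
  replace (f w - f z)%C with ((f w - f z - l * (w - z)) + l * (w - z))%C by ring.
  eapply Rle_trans; [apply Cmod_triangle |]; rewrite Cmod_mult; lra.
Qed.

Theorem rect_integral_cauchy (f : C -> C) (a b c d : R) (z : C) :
  a < fst z < b -> c < snd z < d ->
  (forall x y, a <= x <= b -> c <= y <= d -> holo_at f (x, y)) ->
  rect_integral (fun w => f w * / (w - z))%C a b c d = (two_pi_i * f z)%C.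
Proof.
  intros Hx Hy Hf.
  destruct (proj1 (holo_at_iff f z)) as [l Hl]; [destruct z; apply Hf; simpl in *; lra |].
  destruct (is_Cderive_approx f z l Hl 1 Rlt_0_1) as [dl [Hdl Hw]].
  destruct (exists_pos_lower_bound [dl / 2; fst z - a; b - fst z; snd z - c; d - snd z]) as [e0 [He0 Hle]].
  { simpl; intros t Ht; repeat destruct Ht as [<- | Ht]; lra. }
  assert (e0 <= dl / 2 /\ e0 <= fst z - a /\ e0 <= b - fst z /\ e0 <= snd z - c /\ e0 <= d - snd z)
    as [E1 [E2 [E3 [E4 E5]]]] by (repeat split; apply Hle; simpl; tauto).
  set (q := fun w => ((f w - f z) * / (w - z))%C).
  apply Cminus_diag_uniq.
  apply (Cmod_small_eq_0 _ (8 * (1 + Cmod l)) e0 He0); intros e He.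
  assert (Hbd : forall x y, on_rect_boundary (fst z - e) (fst z + e) (snd z - e) (snd z + e) x y ->
    (x, y) <> z /\ e <= Cmod ((x, y) - z) <= 2 * e).
  { intros x y Hxy; destruct (square_boundary_dist z e x y ltac:(lra) Hxy).
    split; [apply neq_of_Cmod_pos; lra | lra]. }
  assert (Hq : rect_integrable q (fst z - e) (fst z + e) (snd z - e) (snd z + e)).
  { apply rect_integrable_of_holo; try lra; intros x y Hxy; destruct (Hbd x y Hxy) as [Hz _].
    apply holo_at_mult; [apply holo_at_minus; [| apply holo_at_const] | apply holo_at_inv_sub; auto].
    apply Hf; destruct Hxy as [[? [-> | ->]] | [? [-> | ->]]]; lra. }
  assert (Hinv : rect_integrable (fun w => / (w - z))%C (fst z - e) (fst z + e) (snd z - e) (snd z + e)).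
  { apply rect_integrable_of_holo; try lra; intros x y Hxy; apply holo_at_inv_sub, Hbd; auto. }
  rewrite (rect_integral_shrink_square _ a b c d z e); try lra.
  2:{ intros x y Hx' Hy' Hn; apply holo_at_mult; [apply Hf | apply holo_at_inv_sub]; auto. }
  unfold square_integral; rewrite (rect_integral_ext _ (fun w => q w + f z * / (w - z))%C)
    by (try lra; intros; unfold q; ring).
  rewrite rect_integral_plus, rect_integral_scale by auto using rect_integrable_scale.
  fold (square_integral (fun w => / (w - z))%C z e); rewrite square_integral_inv by lra.
  replace (rect_integral q _ _ _ _ + f z * two_pi_i - two_pi_i * f z)%C
    with (rect_integral q (fst z - e) (fst z + e) (snd z - e) (snd z + e)) by ring.
  replace (8 * (1 + Cmod l) * e)
    with (2 * (1 + Cmod l) * ((fst z + e - (fst z - e)) + (snd z + e - (snd z - e)))) by ring.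
  apply rect_integral_norm_le; try lra; auto.
  intros x y Hxy; destruct (Hbd x y Hxy) as [Hz Hd].
  apply difference_quotient_bound; auto; apply Hw; lra.
Qed.

Notation is_Cseries := (@is_series C_AbsRing C_NormedModule).

Lemma is_Cseries_iff (v : nat -> C) (L : C) : is_Cseries v L <->
  forall eps, 0 < eps -> exists N, forall n, (N <= n)%nat -> Cmod (sum_n v n - L) < eps.
Proof.
  split.
  - intros H eps He; exact (proj1 (filterlim_locally_ball_norm _ L) H (mkposreal eps He)).
  - intros H; apply filterlim_locally_ball_norm; intros eps; exact (H eps (cond_pos eps)).
Qed.

Lemma is_Cseries_unique (v : nat -> C) (L1 L2 : C) : is_Cseries v L1 -> is_Cseries v L2 -> L1 = L2.
Proof. apply filterlim_locally_unique. Qed.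

Lemma is_Cseries_scale (v : nat -> C) (L k : C) :
  is_Cseries v L -> is_Cseries (fun n => k * v n)%C (k * L)%C.
Proof. apply (is_series_scal (K := C_AbsRing) (V := C_NormedModule)). Qed.

Lemma sum_n_Cmult_l (k : C) (u : nat -> C) (N : nat) :
  sum_n (fun n => k * u n)%C N = (k * sum_n u N)%C.
Proof.
  induction N; [rewrite !sum_O; reflexivity |].
  rewrite !sum_Sn, IHN; apply injective_projections; simpl; ring.
Qed.

Lemma is_Cseries_single (v : nat -> C) : (forall n, v (S n) = 0) -> is_Cseries v (v O).
Proof.
  intros H; apply (filterlim_ext (fun _ => v O)); [| apply filterlim_const].
  intros n; induction n; [rewrite sum_O; reflexivity |].
  rewrite sum_Sn, <- IHn, H; simpl; apply injective_projections; simpl; unfold plus; simpl; ring.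
Qed.

Lemma bounded_up_to (g : nat -> R) (M : nat) : exists K, forall n, (n <= M)%nat -> g n <= K.
Proof.
  induction M as [| M [K HK]]; [exists (g O); intros n Hn; replace n with O by lia; lra |].
  exists (Rmax K (g (S M))); intros n Hn.
  destruct (Nat.eq_dec n (S M)) as [-> | Hne]; [apply Rmax_r |].
  eapply Rle_trans; [apply HK; lia | apply Rmax_l].
Qed.

Lemma is_Cseries_terms_bounded (v : nat -> C) (L : C) :
  is_Cseries v L -> exists K, forall n, Cmod (v n) <= K.
Proof.
  intros H; destruct (proj1 (is_Cseries_iff v L) H 1 Rlt_0_1) as [N HN].
  destruct (bounded_up_to (fun n => Cmod (v n)) (S N)) as [K HK].
  exists (Rmax K 2); intros [| n]; [eapply Rle_trans; [apply HK; lia | apply Rmax_l] |].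
  destruct (le_lt_dec (S n) (S N)) as [Hn | Hn]; [eapply Rle_trans; [apply HK; auto | apply Rmax_l] |].
  eapply Rle_trans; [| apply Rmax_r].
  assert (A1 := HN n ltac:(lia)); assert (A2 := HN (S n) ltac:(lia)); rewrite sum_Sn in A2.
  replace (v (S n)) with ((plus (sum_n v n) (v (S n)) - L) - (sum_n v n - L))%C
    by (unfold plus; simpl; ring).
  unfold Cminus at 1; eapply Rle_trans; [apply Cmod_triangle |]; rewrite Cmod_opp; lra.
Qed.

Lemma sum_n_geometric_le (v : nat -> C) (B th : R) (N M : nat) : 0 <= th < 1 -> (N <= M)%nat ->
  (forall k, Cmod (v k) <= B * th ^ k) ->
  Cmod (sum_n v M - sum_n v N) <= B * th ^ S N / (1 - th) - B * th ^ S M / (1 - th).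
Proof.
  intros Hth HNM Hv; induction HNM.
  - replace (sum_n v N - sum_n v N)%C with (RtoC 0) by ring; rewrite Cmod_0; lra.
  - rewrite sum_Sn; replace (plus (sum_n v m) (v (S m)) - sum_n v N)%C
      with ((sum_n v m - sum_n v N) + v (S m))%C by (unfold plus; simpl; ring).
    eapply Rle_trans; [apply Cmod_triangle |]; specialize (Hv (S m)).
    replace (B * th ^ S N / (1 - th) - B * th ^ S (S m) / (1 - th))
      with (B * th ^ S N / (1 - th) - B * th ^ S m / (1 - th) + B * th ^ S m) by (simpl; field; lra).
    lra.
Qed.

Lemma is_Cseries_tail_le (v : nat -> C) (L : C) (B th : R) : 0 <= th < 1 -> is_Cseries v L ->
  (forall k, Cmod (v k) <= B * th ^ k) ->
  forall N, Cmod (L - sum_n v N) <= B * th ^ N / (1 - th).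
Proof.
  intros Hth H Hv N; rewrite is_Cseries_iff in H.
  assert (HB : 0 <= B) by (specialize (Hv O); simpl in Hv; assert (X := Cmod_ge_0 (v O)); lra).
  assert (Hmono : B * th ^ S N / (1 - th) <= B * th ^ N / (1 - th)).
  { unfold Rdiv; apply Rmult_le_compat_r; [left; apply Rinv_0_lt_compat; lra |].
    apply Rmult_le_compat_l; auto; simpl; assert (0 <= th ^ N) by (apply pow_le; lra); nra. }
  apply le_epsilon; intros eps He; destruct (H eps He) as [M HM].
  specialize (HM (M + N)%nat ltac:(lia)).
  assert (D := sum_n_geometric_le v B th N (M + N) Hth ltac:(lia) Hv).
  assert (0 <= B * th ^ S (M + N) / (1 - th)).
  { apply Rdiv_le_0_compat; [apply Rmult_le_pos; auto; apply pow_le |]; lra. }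
  replace (L - sum_n v N)%C with ((sum_n v (M + N) - sum_n v N) - (sum_n v (M + N) - L))%C by ring.
  unfold Cminus at 1; eapply Rle_trans; [apply Cmod_triangle |]; rewrite Cmod_opp; lra.
Qed.

Lemma rect_integral_sum_n (u : nat -> C -> C) (N : nat) (a b c d : R) :
  (forall n, rect_integrable (u n) a b c d) ->
  rect_integrable (fun w => sum_n (fun k => u k w) N) a b c d /\
  rect_integral (fun w => sum_n (fun k => u k w) N) a b c d =
    sum_n (fun k => rect_integral (u k) a b c d) N.
Proof.
  intros Hu; induction N as [| N [IH1 IH2]].
  - replace (fun w => sum_n (fun k => u k w) 0) with (u O) by
      (apply functional_extensionality; intros; rewrite sum_O; auto).
    rewrite sum_O; auto.
  - replace (fun w => sum_n (fun k => u k w) (S N)) with (fun w => sum_n (fun k => u k w) N + u (S N) w)%C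
      by (apply functional_extensionality; intros; rewrite sum_Sn; auto).
    rewrite sum_Sn, rect_integral_plus, IH2 by auto; split; [apply rect_integrable_plus |]; auto.
Qed.

Lemma rect_integral_series (u : nat -> C -> C) (F : C -> C) (a b c d : R) (e : nat -> R) :
  a <= b -> c <= d -> (forall n, rect_integrable (u n) a b c d) -> rect_integrable F a b c d ->
  is_lim_seq e 0 ->
  (forall N x y, on_rect_boundary a b c d x y -> Cmod (F (x, y) - sum_n (fun k => u k (x, y)) N) <= e N) ->
  is_Cseries (fun n => rect_integral (u n) a b c d) (rect_integral F a b c d).
Proof.
  intros Hab Hcd Hu HF He Hb; apply is_Cseries_iff; intros eps Heps.
  set (P := (b - a) + (d - c)).
  assert (HeP : 0 < eps / (2 * (P + 1))) by (apply Rdiv_lt_0_compat; unfold P; lra).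
  destruct (proj2 (is_lim_seq_spec e 0) He (mkposreal _ HeP)) as [N0 HN0].
  exists N0; intros n Hn; specialize (HN0 n Hn); simpl in HN0; rewrite Rminus_0_r in HN0.
  destruct (rect_integral_sum_n u n a b c d Hu) as [Hsum Esum].
  rewrite <- Esum, <- rect_integral_minus by auto.
  eapply Rle_lt_trans; [apply (rect_integral_norm_le _ a b c d (e n)); auto |].
  { apply rect_integrable_minus; auto. }
  { intros x y Hxy; rewrite Cmod_minus_sym; apply Hb; auto. }
  assert (Hen : e n < eps / (2 * (P + 1))) by (eapply Rle_lt_trans; [apply Rle_abs | exact HN0]).
  assert (0 <= e n).
  { eapply Rle_trans; [apply Cmod_ge_0 | apply (Hb n a c)]; left; split; [lra | auto]. }
  fold P; apply Rle_lt_trans with (2 * (eps / (2 * (P + 1))) * P).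
  { apply Rmult_le_compat_r; [unfold P |]; lra. }
  apply Rlt_le_trans with (2 * (eps / (2 * (P + 1))) * (P + 1)); [apply Rmult_lt_compat_l; lra |].
  right; field; unfold P; lra.
Qed.

Lemma inv_sub_geometric (A B : C) (N : nat) : A <> 0 -> A <> B ->
  (/ (A - B) - sum_n (fun k => Cpown B k * Cpown (/ A) (S k)) N = Cpown (B * / A) (S N) * / (A - B))%C.
Proof.
  intros HA HAB; apply Cminus_eq_contra in HAB; induction N.
  - rewrite sum_O; simpl; field; auto.
  - rewrite sum_Sn; change (plus ?u ?v) with (u + v)%C.
    set (Sum := sum_n (fun k => Cpown B k * Cpown (/ A) (S k))%C N).
    replace (/ (A - B) - (Sum + Cpown B (S N) * Cpown (/ A) (S (S N))))%C
      with ((/ (A - B) - Sum) - Cpown B (S N) * Cpown (/ A) (S (S N)))%C by ring.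
    unfold Sum; rewrite IHN, !Cpown_mult; simpl; field; auto.
Qed.

Lemma rect_integral_geometric (g P Q : C -> C) (a b c d th delta : R) :
  a <= b -> c <= d -> 0 <= th < 1 -> 0 < delta ->
  (forall x y, on_rect_boundary a b c d x y ->
     holo_at g (x, y) /\ holo_at P (x, y) /\ holo_at Q (x, y) /\ P (x, y) <> 0 /\
     Cmod (Q (x, y)) <= th * Cmod (P (x, y)) /\ delta <= Cmod (P (x, y) - Q (x, y))) ->
  is_Cseries (fun n => rect_integral (fun w => g w * (Cpown (Q w) n * Cpown (/ P w) (S n)))%C a b c d)
             (rect_integral (fun w => g w * / (P w - Q w))%C a b c d).
Proof.
  intros Hab Hcd Hth Hdelta H.
  destruct (bounded_on_rect_boundary g a b c d Hab Hcd) as [Mg HMg].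
  { intros x y Hxy; apply holo_at_Ccontinuous, H; auto. }
  assert (HMg0 : 0 <= Mg)
    by (eapply Rle_trans; [apply Cmod_ge_0 | apply (HMg a c)]; left; split; [lra | auto]).
  apply (rect_integral_series _ _ a b c d (fun N => Mg * th ^ S N / delta)); auto.
  - intros n; apply rect_integrable_of_holo; auto; intros x y Hxy.
    destruct (H x y Hxy) as [Hg [HP [HQ [HP0 _]]]].
    apply holo_at_mult, holo_at_mult, holo_at_pown, holo_at_inv; auto; apply holo_at_pown; auto.
  - apply rect_integrable_of_holo; auto; intros x y Hxy.
    destruct (H x y Hxy) as [Hg [HP [HQ [_ [_ Hd]]]]].
    apply holo_at_mult, holo_at_inv; auto; [apply holo_at_minus; auto |].
    intros E; rewrite E, Cmod_0 in Hd; lra.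
  - replace 0 with (Mg * 0 / delta) by (unfold Rdiv; ring); unfold Rdiv.
    apply (is_lim_seq_scal_r _ (/ delta) (Mg * 0)), (is_lim_seq_scal_l _ Mg 0).
    apply (is_lim_seq_incr_1 (fun n => th ^ n)), is_lim_seq_geom; rewrite Rabs_right; lra.
  - intros N x y Hxy; destruct (H x y Hxy) as [_ [_ [_ [HP0 [HQ Hd]]]]].
    set (gw := g (x, y)); set (Pw := P (x, y)) in *; set (Qw := Q (x, y)) in *.
    assert (HPQ : Pw <> Qw) by (intros E; rewrite E in Hd;
      replace (Qw - Qw)%C with (RtoC 0) in Hd by ring; rewrite Cmod_0 in Hd; lra).
    replace (gw * / (Pw - Qw) - sum_n (fun k => gw * (Cpown Qw k * Cpown (/ Pw) (S k))) N)%C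
      with (gw * (/ (Pw - Qw) - sum_n (fun k => Cpown Qw k * Cpown (/ Pw) (S k)) N))%C
      by (rewrite sum_n_Cmult_l; ring).
    rewrite inv_sub_geometric, !Cmod_mult, Cmod_Cpown, Cmod_mult, !Cmod_inv
      by (auto; apply Cminus_eq_contra; auto).
    assert (HPpos := proj1 (Cmod_gt_0 _) HP0).
    assert (Hratio : Cmod Qw * / Cmod Pw <= th).
    { apply (Rmult_le_reg_r (Cmod Pw)); auto; rewrite Rmult_assoc, Rinv_l; lra. }
    assert (Hr0 : 0 <= Cmod Qw * / Cmod Pw)
      by (apply Rmult_le_pos; [apply Cmod_ge_0 | left; apply Rinv_0_lt_compat; auto]).
    assert (Hinv : / Cmod (Pw - Qw) <= / delta) by (apply Rinv_le_contravar; auto).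
    unfold Rdiv; rewrite Rmult_assoc; apply Rmult_le_compat; [apply Cmod_ge_0 | | apply HMg; auto |].
    + apply Rmult_le_pos; [apply pow_le; auto | left; apply Rinv_0_lt_compat; lra].
    + apply Rmult_le_compat; [apply pow_le | left; apply Rinv_0_lt_compat | apply pow_incr |]; auto; lra.
Qed.

Ltac coord_neq := apply pair_neq; first [left; intro; lra | right; intro; lra].

Section Laurent.

Variables (f : C -> C) (sx sy T : R).
Hypothesis T_pos : 0 < T.
Hypothesis f_holo : forall x y, sx - T <= x <= sx + T -> sy - T <= y <= sy + T ->
  (x, y) <> (sx, sy) -> holo_at f (x, y).

Lemma square_integral_radius_indep (g : C -> C) (t t' : R) : 0 < t <= t' -> t' <= T ->
  (forall x y, sx - T <= x <= sx + T -> sy - T <= y <= sy + T -> (x, y) <> (sx, sy) -> holo_at g (x, y)) ->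
  square_integral g (sx, sy) t' = square_integral g (sx, sy) t.
Proof.
  intros Ht Ht' Hg; unfold square_integral at 1; simpl.
  apply rect_integral_shrink_square; simpl; try lra.
  intros; apply Hg; auto; lra.
Qed.

Lemma holo_cauchy_kernel (z : C) (x y : R) : sx - T <= x <= sx + T -> sy - T <= y <= sy + T ->
  (x, y) <> (sx, sy) -> (x, y) <> z -> holo_at (fun w => f w * / (w - z))%C (x, y).
Proof. intros; apply holo_at_mult; [apply f_holo | apply holo_at_inv_sub]; auto. Qed.

Lemma annulus_cauchy_piece (zx zy a b c d : R) :
  sx - T <= a -> b <= sx + T -> sy - T <= c -> d <= sy + T -> a < zx < b -> c < zy < d ->
  sx < a \/ b < sx \/ sy < c \/ d < sy ->
  rect_integral (fun w => f w * / (w - (zx, zy)))%C a b c d = (two_pi_i * f (zx, zy))%C.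
Proof.
  intros Ha Hb Hc Hd Hx Hy Hs; apply rect_integral_cauchy; simpl; auto.
  intros x y Hx' Hy'; apply f_holo; try lra; destruct Hs as [? | [? | [? | ?]]]; coord_neq.
Qed.

Lemma annulus_hole_piece (zx zy t a b c d : R) : 0 < t ->
  sx - T <= a <= sx - t -> sx + t <= b <= sx + T -> sy - T <= c <= sy - t -> sy + t <= d <= sy + T ->
  zx < a \/ b < zx \/ zy < c \/ d < zy ->
  rect_integral (fun w => f w * / (w - (zx, zy)))%C a b c d =
  square_integral (fun w => f w * / (w - (zx, zy)))%C (sx, sy) t.
Proof.
  intros Ht Ha Hb Hc Hd Hz; apply rect_integral_shrink_square; simpl; try lra.
  intros x y Hx Hy Hn; apply holo_cauchy_kernel; try lra; auto.
  destruct Hz as [? | [? | [? | ?]]]; coord_neq.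
Qed.

Lemma square_integral_annulus (zx zy : R) : 0 < Cmod ((zx, zy) - (sx, sy)) < T ->
  let t := Cmod ((zx, zy) - (sx, sy)) / 4 in
  (square_integral (fun w => f w * / (w - (zx, zy))) (sx, sy) T
   - square_integral (fun w => f w * / (w - (zx, zy))) (sx, sy) t)%C = (two_pi_i * f (zx, zy))%C.
Proof.
  intros Hd t; set (d := Cmod ((zx, zy) - (sx, sy))) in *.
  assert (Ez : ((zx, zy) - (sx, sy))%C = (zx - sx, zy - sy)) by (apply injective_projections; simpl; ring).
  assert (Hdx : Rabs (zx - sx) <= d) by (unfold d; rewrite Ez; apply (Cmod_fst (zx - sx, zy - sy))).
  assert (Hdy : Rabs (zy - sy) <= d) by (unfold d; rewrite Ez; apply (Cmod_snd (zx - sx, zy - sy))).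
  assert (Hds : d <= Rabs (zx - sx) + Rabs (zy - sy)) by (unfold d; rewrite Ez; apply Cmod_pair_le).
  assert (Ht : 0 < t) by (unfold t; lra).
  apply Rabs_le_between in Hdx; apply Rabs_le_between in Hdy.
  assert (Hcont : forall x y, sx - T <= x <= sx + T -> sy - T <= y <= sy + T -> (x, y) <> (sx, sy) ->
    (x, y) <> (zx, zy) -> Ccontinuous (fun w => f w * / (w - (zx, zy)))%C (x, y))
    by (intros; apply holo_at_Ccontinuous, holo_cauchy_kernel; auto).
  unfold square_integral; simpl.
  assert (t < zx - sx \/ t < sx - zx \/ t < zy - sy \/ t < sy - zy) as [Hc | [Hc | [Hc | Hc]]].
  { destruct (Rlt_dec t (zx - sx)), (Rlt_dec t (sx - zx)), (Rlt_dec t (zy - sy)); try tauto.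
    right; right; right; apply Rnot_lt_le in n, n0, n1.
    assert (Rabs (zx - sx) <= t) by (apply Rabs_le; lra).
    unfold t in *; destruct (Rcase_abs (zy - sy));
      [rewrite (Rabs_left (zy - sy)) in Hds | rewrite (Rabs_right (zy - sy)) in Hds]; lra. }
  - rewrite (rect_integral_split_x _ (sx - T) (sx + t) (sx + T)) by (try lra; intros x y Hxy; apply Hcont;
      destruct Hxy as [[? [-> | ->]] | [? [-> | ->]]]; try lra; coord_neq).
    rewrite (annulus_hole_piece zx zy t (sx - T) (sx + t)),
        (annulus_cauchy_piece zx zy (sx + t) (sx + T)) by lra.
    unfold square_integral; simpl; ring.
  - rewrite (rect_integral_split_x _ (sx - T) (sx - t) (sx + T)) by (try lra; intros x y Hxy; apply Hcont;
      destruct Hxy as [[? [-> | ->]] | [? [-> | ->]]]; try lra; coord_neq).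
    rewrite (annulus_hole_piece zx zy t (sx - t) (sx + T)),
        (annulus_cauchy_piece zx zy (sx - T) (sx - t)) by lra.
    unfold square_integral; simpl; ring.
  - rewrite (rect_integral_split_y _ (sx - T) (sx + T) (sy - T) (sy + t) (sy + T)) by
      (try lra; intros x y Hxy;
      apply Hcont; destruct Hxy as [[? [-> | ->]] | [? [-> | ->]]]; try lra; coord_neq).
    rewrite (annulus_hole_piece zx zy t (sx - T) (sx + T) (sy - T) (sy + t)),
      (annulus_cauchy_piece zx zy (sx - T) (sx + T) (sy + t) (sy + T)) by lra.
    unfold square_integral; simpl; ring.
  - rewrite (rect_integral_split_y _ (sx - T) (sx + T) (sy - T) (sy - t) (sy + T)) by
      (try lra; intros x y Hxy;
      apply Hcont; destruct Hxy as [[? [-> | ->]] | [? [-> | ->]]]; try lra; coord_neq).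
    rewrite (annulus_hole_piece zx zy t (sx - T) (sx + T) (sy - t) (sy + T)),
      (annulus_cauchy_piece zx zy (sx - T) (sx + T) (sy - T) (sy - t)) by lra.
    unfold square_integral; simpl; ring.
Qed.


Lemma square_boundary_facts (t x y : R) : 0 < t <= T ->
  on_rect_boundary (sx - t) (sx + t) (sy - t) (sy + t) x y ->
  holo_at f (x, y) /\ (x, y) <> (sx, sy) /\ t <= Cmod ((x, y) - (sx, sy)) <= 2 * t.
Proof.
  intros Ht Hxy; assert (Hd := square_boundary_dist (sx, sy) t x y ltac:(lra) Hxy); simpl in Hd.
  assert (Hne : (x, y) <> (sx, sy)) by (apply neq_of_Cmod_pos; lra).
  repeat split; try lra; auto.
  apply f_holo; auto; destruct Hxy as [[? [-> | ->]] | [? [-> | ->]]]; lra.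
Qed.

Lemma square_integral_outer_expansion (zx zy : R) : Cmod ((zx, zy) - (sx, sy)) < T ->
  is_Cseries (fun n => Cpown ((zx, zy) - (sx, sy)) n *
                square_integral (fun w => f w * Cpown (/ (w - (sx, sy))) (S n)) (sx, sy) T)%C
             (square_integral (fun w => f w * / (w - (zx, zy)))%C (sx, sy) T).
Proof.
  intros Hd; unfold square_integral; cbn [fst snd].
  set (z := (zx, zy)) in *; set (s := (sx, sy)) in *; set (d := Cmod (z - s)) in *.
  assert (Hd0 : 0 <= d) by apply Cmod_ge_0.
  rewrite (rect_integral_ext _ (fun w => f w * / ((w - s) - (z - s)))%C) by
      (try lra; intros; f_equal; f_equal; ring).
  eapply is_series_ext;
    [| apply (rect_integral_geometric f (fun w => w - s)%C (fun _ => z - s)%C _ _ _ _ (d / T) (T - d));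
        try lra].
  - intros n; cbv beta; rewrite <- rect_integral_scale.
    + apply rect_integral_ext; try lra; intros; ring.
    + apply rect_integrable_of_holo; try lra; intros x y Hxy.
      destruct (square_boundary_facts T x y ltac:(lra) Hxy) as [Hf [Hne _]].
      apply holo_at_mult, holo_at_pown, holo_at_inv_sub; auto.
  - split; [apply Rdiv_le_0_compat |]; try lra; apply (Rmult_lt_reg_r T); [lra |].
    replace (d / T * T) with d by (field; lra); lra.
  - intros x y Hxy; destruct (square_boundary_facts T x y ltac:(lra) Hxy) as [Hf [Hne Hdist]].
    fold s in Hne, Hdist; repeat split; auto using holo_at_sub_const, holo_at_const, Cminus_eq_contra.
    + apply (Rmult_le_reg_r (/ Cmod ((x, y) - s))); [apply Rinv_0_lt_compat; lra |].
      unfold Rdiv; rewrite (Rmult_assoc (d * / T)), Rinv_r, Rmult_1_r by lra.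
      apply Rmult_le_compat_l; auto; apply Rinv_le_contravar; lra.
    + assert (X := Cmod_triang_inv ((x, y) - s) (z - s)); fold d in X; lra.
Qed.

Lemma square_integral_inner_expansion (zx zy : R) : 0 < Cmod ((zx, zy) - (sx, sy)) < T ->
  let t := Cmod ((zx, zy) - (sx, sy)) / 4 in
  is_Cseries (fun n => Cpown (/ ((zx, zy) - (sx, sy))) (S n) *
                square_integral (fun w => f w * Cpown (w - (sx, sy)) n) (sx, sy) t)%C
             (square_integral (fun w => f w * / ((zx, zy) - w))%C (sx, sy) t).
Proof.
  intros Hd t; unfold square_integral; cbn [fst snd].
  set (z := (zx, zy)) in *; set (s := (sx, sy)) in *; set (d := Cmod (z - s)) in *.
  assert (Ht : 0 < t <= T) by (unfold t; lra).
  assert (Hzs : (z - s)%C <> 0) by (apply Cminus_eq_contra, neq_of_Cmod_pos; fold d; lra).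
  rewrite (rect_integral_ext _ (fun w => f w * / ((z - s) - (w - s)))%C) by
      (try lra; intros; f_equal; f_equal; ring).
  eapply is_series_ext;
    [| apply (rect_integral_geometric f (fun _ => z - s)%C (fun w => w - s)%C _ _ _ _ (1 / 2) (d / 2));
        try lra].
  - intros n; cbv beta; rewrite <- rect_integral_scale.
    + apply rect_integral_ext; try lra; intros; ring.
    + apply rect_integrable_of_holo; try lra; intros x y Hxy.
      destruct (square_boundary_facts t x y ltac:(lra) Hxy) as [Hf _].
      apply holo_at_mult, holo_at_pown, holo_at_sub_const; auto.
  - intros x y Hxy; destruct (square_boundary_facts t x y ltac:(lra) Hxy) as [Hf [_ Hdist]].
    fold s in Hdist; repeat split; auto using holo_at_sub_const, holo_at_const.
    + fold d; unfold t in Hdist; lra.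
    + assert (X := Cmod_triang_inv (z - s) ((x, y) - s)); fold d in X; unfold t in Hdist; lra.
Qed.

Definition laurent_coef (k : Z) : C :=
  match k with
  | Zneg p => (/ two_pi_i * square_integral (fun w => f w * Cpown (w - (sx, sy)) (Pos.to_nat p - 1))
      (sx, sy) (T / 2))%C
  | _ => (/ two_pi_i * square_integral (fun w => f w * Cpown (/ (w - (sx, sy))) (S (Z.to_nat k)))
      (sx, sy) T)%C
  end.

Lemma laurent_coef_nonneg (n : nat) : laurent_coef (Z.of_nat n) =
  (/ two_pi_i * square_integral (fun w => f w * Cpown (/ (w - (sx, sy))) (S n)) (sx, sy) T)%C.
Proof. destruct n; [reflexivity |]; unfold laurent_coef; simpl; rewrite SuccNat2Pos.id_succ;
    reflexivity. Qed.

Lemma laurent_coef_neg (n : nat) : laurent_coef (- Z.of_nat (S n)) =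
  (/ two_pi_i * square_integral (fun w => f w * Cpown (w - (sx, sy)) n) (sx, sy) (T / 2))%C.
Proof. unfold laurent_coef; simpl; rewrite SuccNat2Pos.id_succ; replace (S n - 1)%nat with n by lia;
    reflexivity. Qed.

Lemma two_pi_i_neq_0 : two_pi_i <> 0.
Proof. unfold two_pi_i; intro X; injection X; intros; assert (Y := PI_RGT_0); lra. Qed.

Theorem laurent_expansion_exists : is_laurent_expansion f (sx, sy) laurent_coef.
Proof.
  exists T; split; auto; intros [zx zy] Hz.
  set (t := Cmod ((zx, zy) - (sx, sy)) / 4).
  set (h := fun w => (f w * / (w - (zx, zy)))%C).
  exists (/ two_pi_i * square_integral h (sx, sy) T)%C.
  exists (/ two_pi_i * square_integral (fun w => f w * / ((zx, zy) - w)) (sx, sy) t)%C.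
  split; [| split].
  - eapply is_series_ext;
      [| exact (is_Cseries_scale _ _ (/ two_pi_i) (square_integral_outer_expansion zx zy ltac:(lra)))].
    intros n; rewrite laurent_coef_nonneg; change (?u = ?v) with (@eq C u v); ring.
  - eapply is_series_ext;
      [| exact (is_Cseries_scale _ _ (/ two_pi_i) (square_integral_inner_expansion zx zy Hz))].
    intros n; rewrite laurent_coef_neg, Cinv_Cpown; change (?u = ?v) with (@eq C u v).
    rewrite (square_integral_radius_indep _ t (T / 2)); [fold t; ring | unfold t; lra | lra |].
    intros; apply holo_at_mult; [apply f_holo | apply holo_at_pown, holo_at_sub_const]; auto.
  - assert (Hann := square_integral_annulus zx zy Hz); fold t h in Hann.
    assert (E : square_integral (fun w => f w * / ((zx, zy) - w))%C (sx, sy) t =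
        (- square_integral h (sx, sy) t)%C).
    { unfold square_integral; cbn [fst snd].
      rewrite (rect_integral_ext _ (fun w => RtoC (-1) * h w)%C) by
          (try (unfold t; lra); intros x y _; unfold h;
        replace ((zx, zy) - (x, y))%C with (- ((x, y) - (zx, zy)))%C by ring; rewrite Cinv_opp;
        apply injective_projections; simpl; ring).
      rewrite rect_integral_scale; [apply injective_projections; simpl; ring |].
      apply rect_integrable_of_holo; try (unfold t; lra); intros x y Hxy.
      destruct (square_boundary_facts t x y ltac:(unfold t; lra) Hxy) as [Hf [_ Hdist]].
      apply holo_at_mult, holo_at_inv_sub; auto.
      intros E'; rewrite E' in Hdist; unfold t in Hdist; lra. }
    rewrite E;
      replace (/ two_pi_i * square_integral h (sx, sy) T + / two_pi_i * - square_integral h (sx, sy) t)%C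
      with (/ two_pi_i * (square_integral h (sx, sy) T - square_integral h (sx, sy) t))%C by ring.
    rewrite Hann; field; apply two_pi_i_neq_0.
Qed.

End Laurent.

Lemma square_integral_laurent_term (s : C) (e : R) (a b : C) (n : nat) : 0 < e ->
  square_integral (fun w => a * Cpown (w - s) n + b * / Cpown (w - s) (S n))%C s e =
  (b * match n with O => two_pi_i | S _ => 0 end)%C.
Proof.
  intros He; unfold square_integral.
  assert (Hs : forall x y, on_rect_boundary (fst s - e) (fst s + e) (snd s - e) (snd s + e) x y ->
      (x, y) <> s)
    by (intros x y Hxy; apply neq_of_Cmod_pos; destruct (square_boundary_dist s e x y He Hxy); lra).
  assert (Hpow : rect_integrable (fun w => Cpown (w - s) n) (fst s - e) (fst s + e) (snd s - e)
      (snd s + e)).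
  { apply rect_integrable_of_holo; try lra; intros; apply holo_at_pown, holo_at_sub_const. }
  assert (Hinv : rect_integrable (fun w => Cpown (/ (w - s)) (S n)) (fst s - e) (fst s + e) (snd s - e)
      (snd s + e)).
  { apply rect_integrable_of_holo; try lra; intros; apply holo_at_pown, holo_at_inv_sub; auto. }
  rewrite (rect_integral_ext _ (fun w => a * Cpown (w - s) n + b * Cpown (/ (w - s)) (S n))%C)
    by (try lra; intros; rewrite Cinv_Cpown; reflexivity).
  rewrite rect_integral_plus, !rect_integral_scale,
      rect_integral_pown by (auto using rect_integrable_scale; lra).
  destruct n as [| n].
  - rewrite (rect_integral_ext _ (fun w => / (w - s))%C) by (try lra; intros; simpl; ring).
    fold (square_integral (fun w => / (w - s))%C s e); rewrite square_integral_inv by auto; ring.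
  - rewrite rect_integral_inv_pown by (auto; lra); ring.
Qed.

Lemma laurent_terms_bounded (f : C -> C) (s : C) (al : Z -> C) (r rho : R) : 0 < rho < r ->
  (forall z, 0 < Cmod (z - s) < r -> exists p q : C,
     is_Cseries (fun n => al (Z.of_nat n) * Cpown (z - s) n)%C p /\
     is_Cseries (fun n => al (- Z.of_nat (S n))%Z * / Cpown (z - s) (S n))%C q /\ f z = (p + q)%C) ->
  (exists K1, forall n, Cmod (al (Z.of_nat n)) * rho ^ n <= K1) /\
  (exists K2, forall n, Cmod (al (- Z.of_nat (S n))%Z) * / rho ^ S n <= K2).
Proof.
  intros Hrho Hl.
  set (z1 := (fst s + rho, snd s) : C).
  assert (Ez : (z1 - s)%C = RtoC rho) by (destruct s; apply injective_projections; simpl; ring).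
  destruct (Hl z1) as [p [q [Sp [Sq _]]]]; [rewrite Ez, Cmod_R, Rabs_right; lra |].
  destruct (is_Cseries_terms_bounded _ _ Sp) as [K1 HK1].
  destruct (is_Cseries_terms_bounded _ _ Sq) as [K2 HK2].
  split; [exists K1 | exists K2]; intros n; [specialize (HK1 n) | specialize (HK2 n)]; rewrite Ez in *.
  - rewrite Cmod_mult, Cmod_Cpown, Cmod_R, Rabs_right in HK1 by lra; auto.
  - rewrite Cmod_mult, Cmod_inv, Cmod_Cpown, Cmod_R, Rabs_right in HK2; auto; [lra |].
    apply Cpown_neq_0; intro X; injection X; lra.
Qed.

Lemma laurent_tail_bound (al : Z -> C) (z s p q : C) (r e K1 K2 : R) (N : nat) :
  0 < e -> 8 * e <= r -> e <= Cmod (z - s) <= 2 * e ->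
  (forall n, Cmod (al (Z.of_nat n)) * (r / 2) ^ n <= K1) ->
  (forall n, Cmod (al (- Z.of_nat (S n))%Z) * / (e / 2) ^ S n <= K2) ->
  is_Cseries (fun n => al (Z.of_nat n) * Cpown (z - s) n)%C p ->
  is_Cseries (fun n => al (- Z.of_nat (S n))%Z * / Cpown (z - s) (S n))%C q ->
  Cmod (p + q - sum_n (fun k => al (Z.of_nat k) * Cpown (z - s) k
                                + al (- Z.of_nat (S k))%Z * / Cpown (z - s) (S k))%C N)
    <= 2 * (K1 + K2) * (1 / 2) ^ N.
Proof.
  intros He Hr Hm HK1 HK2 Sp Sq; set (m := Cmod (z - s)) in *.
  assert (Hzs : (z - s)%C <> 0) by (intros E; unfold m in Hm; rewrite E, Cmod_0 in Hm; lra).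
  assert (Bd1 : forall k, Cmod (al (Z.of_nat k) * Cpown (z - s) k) <= K1 * (1 / 2) ^ k).
  { intros k; rewrite Cmod_mult, Cmod_Cpown; fold m.
    apply Rle_trans with (Cmod (al (Z.of_nat k)) * (r / 2) ^ k * (1 / 2) ^ k).
    - rewrite Rmult_assoc, <- Rpow_mult_distr; apply Rmult_le_compat_l; [apply Cmod_ge_0 |].
      apply pow_incr; lra.
    - apply Rmult_le_compat_r; [apply pow_le; lra | apply HK1]. }
  assert (Bd2 : forall k, Cmod (al (- Z.of_nat (S k))%Z * / Cpown (z - s) (S k)) <= K2 * (1 / 2) ^ k).
  { intros k; rewrite Cmod_mult, Cmod_inv, Cmod_Cpown by (apply Cpown_neq_0; auto); fold m.
    assert (HK2' := HK2 k); assert (Hp := pow_le (1 / 2) k ltac:(lra)).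
    assert (0 <= K2) by (eapply Rle_trans; [| apply HK2']; apply Rmult_le_pos;
      [apply Cmod_ge_0 | left; apply Rinv_0_lt_compat, pow_lt; lra]).
    apply Rle_trans with (Cmod (al (- Z.of_nat (S k))%Z) * / (e / 2) ^ S k * (1 / 2) ^ S k).
    - rewrite Rmult_assoc; apply Rmult_le_compat_l; [apply Cmod_ge_0 |].
      replace (/ (e / 2) ^ S k * (1 / 2) ^ S k) with (/ e ^ S k).
      2:{ replace ((e / 2) ^ S k) with (e ^ S k * (1 / 2) ^ S k) by
          (rewrite <- Rpow_mult_distr; f_equal; field).
          field; split; apply pow_nonzero; lra. }
      apply Rinv_le_contravar; [apply pow_lt; lra | apply pow_incr; lra].
    - apply Rle_trans with (K2 * (1 / 2) ^ S k); [apply Rmult_le_compat_r; [apply pow_le; lra | auto] |].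
      simpl; nra. }
  assert (T1 := is_Cseries_tail_le _ _ K1 (1 / 2) ltac:(lra) Sp Bd1 N).
  assert (T2 := is_Cseries_tail_le _ _ K2 (1 / 2) ltac:(lra) Sq Bd2 N).
  rewrite (sum_n_plus (G := C_AbelianMonoid)); change (plus ?u ?v) with (u + v)%C.
  replace (p + q - (sum_n (fun k => al (Z.of_nat k) * Cpown (z - s) k) N +
                    sum_n (fun k => al (- Z.of_nat (S k))%Z * / Cpown (z - s) (S k)) N))%C
    with ((p - sum_n (fun k => al (Z.of_nat k) * Cpown (z - s) k) N) +
          (q - sum_n (fun k => al (- Z.of_nat (S k))%Z * / Cpown (z - s) (S k)) N))%C by ring.
  eapply Rle_trans; [apply Cmod_triangle |].
  replace (2 * (K1 + K2) * (1 / 2) ^ N) with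
      (K1 * (1 / 2) ^ N / (1 - 1 / 2) + K2 * (1 / 2) ^ N / (1 - 1 / 2))
    by field; lra.
Qed.

Lemma square_integral_of_laurent (f : C -> C) (s : C) (al : Z -> C) (r e : R) : 0 < e -> 8 * e <= r ->
  (forall z, 0 < Cmod (z - s) < r -> exists p q : C,
     is_Cseries (fun n => al (Z.of_nat n) * Cpown (z - s) n)%C p /\
     is_Cseries (fun n => al (- Z.of_nat (S n))%Z * / Cpown (z - s) (S n))%C q /\ f z = (p + q)%C) ->
  (forall x y, on_rect_boundary (fst s - e) (fst s + e) (snd s - e) (snd s + e) x y -> holo_at f (x, y)) ->
  square_integral f s e = (two_pi_i * al (-1)%Z)%C.
Proof.
  intros He Hr Hl Hf.
  destruct (laurent_terms_bounded f s al r (r / 2) ltac:(lra) Hl) as [[K1 HK1] _].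
  destruct (laurent_terms_bounded f s al r (e / 2) ltac:(lra) Hl) as [_ [K2 HK2]].
  set (u := fun n w => (al (Z.of_nat n) * Cpown (w - s) n + al (- Z.of_nat (S n))%Z * / Cpown (w - s)
      (S n))%C).
  assert (Hs : forall x y, on_rect_boundary (fst s - e) (fst s + e) (snd s - e) (snd s + e) x y ->
    (x, y) <> s /\ e <= Cmod ((x, y) - s) <= 2 * e).
  { intros x y Hxy; destruct (square_boundary_dist s e x y He Hxy); split; [apply neq_of_Cmod_pos |]; lra. }
  assert (Hser : is_Cseries (fun n => square_integral (u n) s e) (square_integral f s e)).
  { apply (rect_integral_series u f _ _ _ _ (fun N => 2 * (K1 + K2) * (1 / 2) ^ N)); try lra.
    - intros n; apply rect_integrable_of_holo; try lra; intros x y Hxy; destruct (Hs x y Hxy) as [Hne _].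
      apply holo_at_plus; apply holo_at_scale; [apply holo_at_pown, holo_at_sub_const |].
      apply (holo_at_ext (fun w => Cpown (/ (w - s)) (S n))); [intros; rewrite Cinv_Cpown; auto |].
      apply holo_at_pown, holo_at_inv_sub; auto.
    - apply rect_integrable_of_holo; auto; lra.
    - replace 0 with (2 * (K1 + K2) * 0) by ring.
      apply (is_lim_seq_scal_l _ _ 0), is_lim_seq_geom; rewrite Rabs_right; lra.
    - intros N x y Hxy; destruct (Hs x y Hxy) as [Hne Hd].
      destruct (Hl (x, y)) as [p [q [Sp [Sq ->]]]]; [lra |].
      exact (laurent_tail_bound al (x, y) s p q r e K1 K2 N He Hr Hd HK1 HK2 Sp Sq). }
  assert (Hterm : forall n, square_integral (u n) s e =
    (al (- Z.of_nat (S n))%Z * match n with O => two_pi_i | S _ => 0 end)%C)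
    by (intros; apply square_integral_laurent_term; auto).
  rewrite (is_Cseries_unique _ _ _ Hser (is_Cseries_single (fun n => square_integral (u n) s e)
    ltac:(intros n; cbv beta; rewrite Hterm; ring))), Hterm.
  simpl; ring.
Qed.

Theorem rect_integral_residue (f : C -> C) (a b c d sx sy : R) : a < sx < b -> c < sy < d ->
  (forall x y, a <= x <= b -> c <= y <= d -> (x, y) <> (sx, sy) -> holo_at f (x, y)) ->
  rect_integral f a b c d = (two_pi_i * residue f (sx, sy))%C.
Proof.
  intros Hx Hy Hf.
  destruct (exists_pos_lower_bound [sx - a; b - sx; sy - c; d - sy]) as [T [HT HTle]].
  { simpl; intros t Ht; repeat destruct Ht as [<- | Ht]; lra. }
  assert (T <= sx - a /\ T <= b - sx /\ T <= sy - c /\ T <= d - sy) as [T1 [T2 [T3 T4]]]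
    by (repeat split; apply HTle; simpl; tauto).
  assert (HL := laurent_expansion_exists f sx sy T HT ltac:(intros; apply Hf; auto; lra)).
  unfold residue.
  destruct (epsilon_spec (inhabits (RtoC 0))
    (fun c0 => exists a0, is_laurent_expansion f (sx, sy) a0 /\ a0 (-1)%Z = c0)
    (ex_intro _ _ (ex_intro _ _ (conj HL eq_refl)))) as [al [[r [Hr Hl]] <-]].
  set (e := Rmin (T / 2) (r / 8)).
  assert (He : 0 < e /\ e <= T / 2 /\ e <= r / 8)
    by (unfold e; repeat split; [apply Rmin_glb_lt | apply Rmin_l | apply Rmin_r]; lra).
  rewrite (rect_integral_shrink_square f a b c d (sx, sy) e) by (simpl; try lra; auto).
  apply (square_integral_of_laurent f (sx, sy) al r e); try lra; [exact Hl |].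
  intros x y Hxy; destruct (square_boundary_dist (sx, sy) e x y ltac:(lra) Hxy).
  simpl in Hxy; apply Hf; [destruct Hxy as [[? [-> | ->]] | [? [-> | ->]]]; lra .. |].
  apply neq_of_Cmod_pos; lra.
Qed.

Definition holo_on_rect_except (f : C -> C) (L : list C) (a b c d : R) : Prop :=
  NoDup L /\ (forall s, In s L -> a < fst s < b /\ c < snd s < d) /\
  (forall x y, a <= x <= b -> c <= y <= d -> ~ In (x, y) L -> holo_at f (x, y)).

Definition fst_lt (m : R) (s : C) : bool := if Rlt_dec (fst s) m then true else false.
Definition snd_lt (m : R) (s : C) : bool := if Rlt_dec (snd s) m then true else false.

Lemma Csum_filter {A : Type} (g : A -> C) (p : A -> bool) (l : list A) :
  Csum (map g l) = (Csum (map g (filter p l)) + Csum (map g (filter (fun x => negb (p x)) l)))%C.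
Proof.
  induction l as [| x l IH]; simpl; [apply injective_projections; simpl; ring |].
  destruct (p x); simpl; rewrite IH; ring.
Qed.

Lemma length_filter_lt {A : Type} (p : A -> bool) (l : list A) (x : A) :
  In x l -> p x = false -> (length (filter p l) < length l)%nat.
Proof.
  induction l as [| y l IH]; simpl; [tauto |]; intros [-> | Hx] Hp.
  - rewrite Hp; assert (H := filter_length_le p l); lia.
  - destruct (p y); simpl; specialize (IH Hx Hp); lia.
Qed.

Lemma length_filter_split_lt {A : Type} (p : A -> bool) (l : list A) (x y : A) :
  In x l -> In y l -> p x = true -> p y = false ->
  (length (filter p l) < length l)%nat /\ (length (filter (fun z => negb (p z)) l) < length l)%nat.
Proof.
  intros Hx Hy Hpx Hpy; split; [apply (length_filter_lt _ _ y) | apply (length_filter_lt _ _ x)]; auto.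
  rewrite Hpx; auto.
Qed.

Lemma exists_between_avoiding (l : list R) (u v : R) : u < v ->
  exists m, u < m < v /\ forall h, In h l -> h <> m.
Proof.
  revert u v; induction l as [| h l IH]; intros u v Huv.
  - exists ((u + v) / 2); split; [lra | intros h []].
  - destruct (Rlt_dec u h) as [H1 | H1]; [destruct (Rlt_dec h v) as [H2 | H2] |].
    + destruct (IH u h H1) as [m [Hm Hl]]; exists m; split; [lra |].
      intros h' [<- | Hh']; [lra | auto].
    + destruct (IH u v Huv) as [m [Hm Hl]]; exists m; split; auto; intros h' [<- | Hh']; [lra | auto].
    + destruct (IH u v Huv) as [m [Hm Hl]]; exists m; split; auto; intros h' [<- | Hh']; [lra | auto].
Qed.

Lemma holo_on_rect_except_cut_x (f : C -> C) (L : list C) (a m b c d : R) :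
  holo_on_rect_except f L a b c d -> a < m < b -> c <= d -> (forall s, In s L -> fst s <> m) ->
  holo_on_rect_except f (filter (fst_lt m) L) a m c d /\
  holo_on_rect_except f (filter (fun s => negb (fst_lt m s)) L) m b c d /\
  rect_integral f a b c d = (rect_integral f a m c d + rect_integral f m b c d)%C.
Proof.
  intros [HND [HL Hf]] Hm Hcd Hoff.
  assert (In1 : forall s, In s (filter (fst_lt m) L) <-> In s L /\ fst s < m).
  { intros s; rewrite filter_In; unfold fst_lt; destruct Rlt_dec; intuition; discriminate. }
  assert (In2 : forall s, In s (filter (fun s => negb (fst_lt m s)) L) <-> In s L /\ m < fst s).
  { intros s; rewrite filter_In; unfold fst_lt; destruct Rlt_dec; simpl; split; intros [Hs H];
      try discriminate; split; auto; try lra; specialize (Hoff s Hs); lra. }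
  assert (Hcont : forall x y, a <= x <= b -> c <= y <= d -> (x = a \/ x = b \/ x = m \/ y = c \/ y = d) ->
    Ccontinuous f (x, y)).
  { intros x y Hx Hy Hxy; apply holo_at_Ccontinuous, Hf; auto; intros Hin.
    destruct (HL _ Hin) as [[X1 X2] [Y1 Y2]]; specialize (Hoff _ Hin); simpl in *; lra. }
  split; [| split]; [split; [| split] .. |].
  - apply NoDup_filter; auto.
  - intros s Hs; apply In1 in Hs; destruct Hs as [Hs1 Hs2]; destruct (HL s Hs1); split; lra.
  - intros x y Hx Hy Hn; apply Hf; try lra; intros Hin; apply Hn, In1; split; auto.
    specialize (Hoff _ Hin); simpl in *; lra.
  - apply NoDup_filter; auto.
  - intros s Hs; apply In2 in Hs; destruct Hs as [Hs1 Hs2]; destruct (HL s Hs1); split; lra.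
  - intros x y Hx Hy Hn; apply Hf; try lra; intros Hin; apply Hn, In2; split; auto.
    specialize (Hoff _ Hin); simpl in *; lra.
  - apply rect_integral_split_x; try lra; intros x y Hxy; apply Hcont;
      destruct Hxy as [[? [-> | ->]] | [? [-> | ->]]]; lra.
Qed.

Lemma holo_on_rect_except_cut_y (f : C -> C) (L : list C) (a b c m d : R) :
  holo_on_rect_except f L a b c d -> a <= b -> c < m < d -> (forall s, In s L -> snd s <> m) ->
  holo_on_rect_except f (filter (snd_lt m) L) a b c m /\
  holo_on_rect_except f (filter (fun s => negb (snd_lt m s)) L) a b m d /\
  rect_integral f a b c d = (rect_integral f a b c m + rect_integral f a b m d)%C.
Proof.
  intros [HND [HL Hf]] Hab Hm Hoff.
  assert (In1 : forall s, In s (filter (snd_lt m) L) <-> In s L /\ snd s < m).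
  { intros s; rewrite filter_In; unfold snd_lt; destruct Rlt_dec; intuition; discriminate. }
  assert (In2 : forall s, In s (filter (fun s => negb (snd_lt m s)) L) <-> In s L /\ m < snd s).
  { intros s; rewrite filter_In; unfold snd_lt; destruct Rlt_dec; simpl; split; intros [Hs H];
      try discriminate; split; auto; try lra; specialize (Hoff s Hs); lra. }
  assert (Hcont : forall x y, a <= x <= b -> c <= y <= d -> (x = a \/ x = b \/ y = m \/ y = c \/ y = d) ->
    Ccontinuous f (x, y)).
  { intros x y Hx Hy Hxy; apply holo_at_Ccontinuous, Hf; auto; intros Hin.
    destruct (HL _ Hin) as [[X1 X2] [Y1 Y2]]; specialize (Hoff _ Hin); simpl in *; lra. }
  split; [| split]; [split; [| split] .. |].
  - apply NoDup_filter; auto.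
  - intros s Hs; apply In1 in Hs; destruct Hs as [Hs1 Hs2]; destruct (HL s Hs1); split; lra.
  - intros x y Hx Hy Hn; apply Hf; try lra; intros Hin; apply Hn, In1; split; auto.
    specialize (Hoff _ Hin); simpl in *; lra.
  - apply NoDup_filter; auto.
  - intros s Hs; apply In2 in Hs; destruct Hs as [Hs1 Hs2]; destruct (HL s Hs1); split; lra.
  - intros x y Hx Hy Hn; apply Hf; try lra; intros Hin; apply Hn, In2; split; auto.
    specialize (Hoff _ Hin); simpl in *; lra.
  - apply rect_integral_split_y; try lra; intros x y Hxy; apply Hcont;
      destruct Hxy as [[? [-> | ->]] | [? [-> | ->]]]; lra.
Qed.

Theorem rect_integral_residues (f : C -> C) (L : list C) (a b c d : R) : a <= b -> c <= d ->
  holo_on_rect_except f L a b c d ->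
  rect_integral f a b c d = (two_pi_i * Csum (map (residue f) L))%C.
Proof.
  remember (length L) as n eqn:Hn; revert L a b c d Hn.
  induction n as [n IH] using lt_wf_ind; intros L a b c d Hn Hab Hcd HLf.
  pose proof HLf as [HND [HL Hf]].
  destruct L as [| s0 [| s1 rest]].
  - simpl; rewrite rect_integral_holo_zero by (auto; intros; apply Hf; auto).
    apply injective_projections; simpl; ring.
  - destruct s0 as [sx sy]; destruct (HL (sx, sy) (or_introl eq_refl)) as [Hx Hy]; simpl in *.
    rewrite (rect_integral_residue f a b c d sx sy) by
        (auto; intros x y ? ? Hne; apply Hf; auto; intros [E | []]; auto).
    ring.
  - set (L := s0 :: s1 :: rest) in *.
    assert (Hne : s0 <> s1) by (inversion HND; subst; intros E; subst; apply H1; left; auto).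
    assert (H0 : In s0 L) by (left; auto); assert (H1 : In s1 L) by (right; left; auto).
    destruct (HL s0 H0) as [[X0 X0'] [Y0 Y0']], (HL s1 H1) as [[X1 X1'] [Y1 Y1']].
    destruct (Req_dec (fst s0) (fst s1)) as [Ex | Ex].
    + assert (Ey : snd s0 <> snd s1) by (intros E; apply Hne; destruct s0, s1; simpl in *; subst; auto).
      assert (exists sl sh, In sl L /\ In sh L /\ snd sl < snd sh) as [sl [sh [Hl [Hh Hlh]]]]
        by (destruct (Rlt_dec (snd s0) (snd s1)); [exists s0, s1 | exists s1, s0]; repeat split; auto; lra).
      destruct (exists_between_avoiding (map snd L) (snd sl) (snd sh) Hlh) as [m [Hm Hav]].
      assert (Hoff : forall s, In s L -> snd s <> m) by (intros s Hs; apply Hav, in_map; auto).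
      destruct (HL sl Hl), (HL sh Hh).
      destruct (holo_on_rect_except_cut_y f L a b c m d) as [H1' [H2' ->]]; auto; [lra |].
      destruct (length_filter_split_lt (snd_lt m) L sl sh Hl Hh) as [HL1 HL2];
        [unfold snd_lt; destruct Rlt_dec; auto; lra .. |]; rewrite <- Hn in HL1, HL2.
      rewrite (IH _ HL1 _ a b c m eq_refl Hab ltac:(lra) H1'),
          (IH _ HL2 _ a b m d eq_refl Hab ltac:(lra) H2'),
        (Csum_filter (residue f) (snd_lt m) L); ring.
    + assert (exists sl sh, In sl L /\ In sh L /\ fst sl < fst sh) as [sl [sh [Hl [Hh Hlh]]]]
        by (destruct (Rlt_dec (fst s0) (fst s1)); [exists s0, s1 | exists s1, s0]; repeat split; auto; lra).
      destruct (exists_between_avoiding (map fst L) (fst sl) (fst sh) Hlh) as [m [Hm Hav]].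
      assert (Hoff : forall s, In s L -> fst s <> m) by (intros s Hs; apply Hav, in_map; auto).
      destruct (HL sl Hl), (HL sh Hh).
      destruct (holo_on_rect_except_cut_x f L a m b c d) as [H1' [H2' ->]]; auto; [lra |].
      destruct (length_filter_split_lt (fst_lt m) L sl sh Hl Hh) as [HL1 HL2];
        [unfold fst_lt; destruct Rlt_dec; auto; lra .. |]; rewrite <- Hn in HL1, HL2.
      rewrite (IH _ HL1 _ a m c d eq_refl ltac:(lra) Hcd H1'),
          (IH _ HL2 _ m b c d eq_refl ltac:(lra) Hcd H2'),
        (Csum_filter (residue f) (fst_lt m) L); ring.
Qed.

Lemma filterlim_p_infty_Cmod (h : R -> C) (l : C) :
  filterlim h (Rbar_locally p_infty) (locally l) ->
  forall eps, 0 < eps -> exists M, forall x, M < x -> Cmod (h x - l) < eps.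
Proof.
  intros H eps He; destruct (H _ (locally_ball l (mkposreal (eps / 2) ltac:(lra)))) as [M HM].
  exists M; intros x Hx; specialize (HM x Hx); apply Cmod_of_ball in HM; simpl in HM; lra.
Qed.

Lemma filterlim_m_infty_Cmod (h : R -> C) (l : C) :
  filterlim h (Rbar_locally m_infty) (locally l) ->
  forall eps, 0 < eps -> exists M, forall x, x < M -> Cmod (h x - l) < eps.
Proof.
  intros H eps He; destruct (H _ (locally_ball l (mkposreal (eps / 2) ltac:(lra)))) as [M HM].
  exists M; intros x Hx; specialize (HM x Hx); apply Cmod_of_ball in HM; simpl in HM; lra.
Qed.

Lemma is_RInt_gen_p_infty_Cmod (g : R -> C) (l : C) :
  @is_RInt_gen C_R_NormedModule g (at_point 0) (Rbar_locally p_infty) l ->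
  forall eps, 0 < eps -> exists M, forall Y, M < Y -> Cmod (CInt g 0 Y - l) < eps.
Proof.
  intros H eps He.
  destruct (H _ (locally_ball l (mkposreal (eps / 2) ltac:(lra)))) as [Q R HQ [M HM] HP].
  exists M; intros Y HY; destruct (HP 0 Y HQ (HM Y HY)) as [y [Hy Hb]]; simpl in Hy.
  rewrite (is_RInt_unique (V := C_R_CompleteNormedModule) _ _ _ _ Hy).
  apply Cmod_of_ball in Hb; simpl in Hb; lra.
Qed.

Lemma bottom_edge_integral (f : C -> C) (a b : R) (J Va Vb : C) : a <= b ->
  (exists Y0, forall Y, Y0 < Y -> rect_integral f a b 0 Y = J) ->
  @is_RInt_gen C_R_NormedModule (fun y => f (a, y)) (at_point 0) (Rbar_locally p_infty) Va ->
  @is_RInt_gen C_R_NormedModule (fun y => f (b, y)) (at_point 0) (Rbar_locally p_infty) Vb ->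
  filterlim (fun y => CInt (fun x => f (x, y)) a b) (Rbar_locally p_infty) (locally (RtoC 0)) ->
  CInt (fun x => f (x, 0)) a b = (J - Ci * Vb + Ci * Va)%C.
Proof.
  intros Hab [Y0 HJ] Ha Hb Htop.
  apply Cminus_diag_uniq.
  apply (Cmod_small_eq_0 _ 3 1 Rlt_0_1); intros e He.
  destruct (is_RInt_gen_p_infty_Cmod _ _ Ha e ltac:(lra)) as [Ma HMa].
  destruct (is_RInt_gen_p_infty_Cmod _ _ Hb e ltac:(lra)) as [Mb HMb].
  destruct (filterlim_p_infty_Cmod _ _ Htop e ltac:(lra)) as [Mt HMt].
  set (Y := Rmax (Rmax Ma Mb) (Rmax Mt Y0) + 1).
  assert (HY : Ma < Y /\ Mb < Y /\ Mt < Y /\ Y0 < Y).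
  { unfold Y; Rmax_bounds; lra. }
  specialize (HJ Y ltac:(lra)); specialize (HMa Y ltac:(lra)); specialize (HMb Y ltac:(lra)).
  specialize (HMt Y ltac:(lra)); unfold rect_integral in HJ; rewrite <- HJ.
  replace (CInt (fun x => f (x, 0)) a b - (CInt (fun x => f (x, 0)) a b + Ci * CInt (fun y => f (b, y)) 0 Y
             - CInt (fun x => f (x, Y)) a b - Ci * CInt (fun y => f (a, y)) 0 Y - Ci * Vb + Ci * Va))%C
    with (- Ci * (CInt (fun y => f (b, y)) 0 Y - Vb) + (CInt (fun x => f (x, Y)) a b - 0)
          + Ci * (CInt (fun y => f (a, y)) 0 Y - Va))%C by ring.
  eapply Rle_trans; [apply Cmod_triangle |]; eapply Rle_trans; [apply Rplus_le_compat_r, Cmod_triangle |].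
  rewrite !Cmod_mult, Cmod_opp, Cmod_Ci; lra.
Qed.

Lemma is_RInt_gen_of_segments (g : R -> C) (V : R -> C) (K : R) (J : C) :
  (forall a b, a < - K -> K < b -> is_CInt g a b (J - Ci * V b + Ci * V a)%C) ->
  filterlim V (Rbar_locally p_infty) (locally (RtoC 0)) ->
  filterlim V (Rbar_locally m_infty) (locally (RtoC 0)) ->
  @is_RInt_gen C_R_NormedModule g (Rbar_locally m_infty) (Rbar_locally p_infty) J.
Proof.
  intros Hseg Hp Hm P [eps HP].
  destruct (filterlim_m_infty_Cmod V 0 Hm (eps / 2) ltac:(destruct eps; simpl; lra)) as [Ma HMa].
  destruct (filterlim_p_infty_Cmod V 0 Hp (eps / 2) ltac:(destruct eps; simpl; lra)) as [Mb HMb].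
  apply (Filter_prod _ _ _ (fun a => a < Rmin (- K) Ma) (fun b => Rmax K Mb < b));
    [exists (Rmin (- K) Ma); auto | exists (Rmax K Mb); auto |].
  intros a b Ha Hb; exists (J - Ci * V b + Ci * V a)%C; split.
  - apply Hseg; [eapply Rlt_le_trans; [apply Ha | apply Rmin_l] | eapply Rle_lt_trans;
      [apply Rmax_l | apply Hb]].
  - apply HP, ball_of_Cmod.
    specialize (HMa a (Rlt_le_trans _ _ _ Ha (Rmin_r _ _)));
        specialize (HMb b (Rle_lt_trans _ _ _ (Rmax_r _ _) Hb)).
    replace (J - Ci * V b + Ci * V a - J)%C with (- Ci * (V b - 0) + Ci * (V a - 0))%C by ring.
    eapply Rle_lt_trans; [apply Cmod_triangle |]; rewrite !Cmod_mult, Cmod_opp, Cmod_Ci; lra.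
Qed.

Lemma list_C_bounded (L : list C) :
  exists K, 0 < K /\ forall s, In s L -> Rabs (fst s) < K /\ Rabs (snd s) < K.
Proof.
  induction L as [| s L [K [HK H]]]; [exists 1; split; [lra | intros s []] |].
  exists (Rmax K (Rabs (fst s) + Rabs (snd s) + 1)); split;
      [eapply Rlt_le_trans; [apply HK | apply Rmax_l] |].
  assert (X1 := Rmax_l K (Rabs (fst s) + Rabs (snd s) + 1)).
  assert (X2 := Rmax_r K (Rabs (fst s) + Rabs (snd s) + 1)).
  intros s' [<- | Hs']; [assert (Y1 := Rabs_pos (fst s)); assert (Y2 := Rabs_pos (snd s)); lra |].
  destruct (H s' Hs'); lra.
Qed.

Theorem theorem1 (f : C -> C) (U : C -> Prop) (S : list C) :
  (* U is an open neighbourhood of the closed upper half-plane *)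
  open U ->
  (forall z : C, 0 <= Im z -> U z) ->
  (* finitely many (distinct) isolated singular points, all with Im > 0 *)
  NoDup S ->
  (forall s : C, In s S -> 0 < Im s) ->
  (* f is holomorphic on U minus the singular points *)
  (forall z : C, U z -> ~ In z S -> holo_at f z) ->
  (* (i) *)
  (exists (M : R) (V : R -> C),
      (forall x : R, M < Rabs x ->
         @is_RInt_gen C_R_NormedModule (fun y : R => f (x, y))
           (at_point 0) (Rbar_locally p_infty) (V x)) /\
      filterlim V (Rbar_locally p_infty) (locally (RtoC 0)) /\
      filterlim V (Rbar_locally m_infty) (locally (RtoC 0))) ->
  (* (ii) *)
  (forall a b : R, a <= b ->
      filterlim (fun y : R => @RInt C_R_CompleteNormedModule
                                 (fun x : R => f (x, y)) a b)
        (Rbar_locally p_infty) (locally (RtoC 0))) ->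
  @is_RInt_gen C_R_NormedModule (fun x : R => f (RtoC x))
    (Rbar_locally m_infty) (Rbar_locally p_infty)
    (Cmult (Cmult (RtoC (2 * PI)) Ci) (Csum (map (residue f) S))).
Proof.
  intros _ HUH HND HS Hholo [M [V [HV [HVp HVm]]]] Hii.
  assert (Hh : forall x y, 0 <= y -> ~ In (x, y) S -> holo_at f (x, y)) by
      (intros; apply Hholo; auto; apply HUH; auto).
  destruct (list_C_bounded S) as [K [HK HKs]].
  apply (is_RInt_gen_of_segments _ V (Rmax K (Rabs M))); auto.
  intros a b Ha Hb; assert (HM := Rmax_r K (Rabs M)); assert (HK' := Rmax_l K (Rabs M)).
  assert (HMa : M < Rabs a) by (rewrite Rabs_left by lra; assert (X := Rle_abs M); lra).
  assert (HMb : M < Rabs b) by (rewrite Rabs_right by lra; assert (X := Rle_abs M); lra).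
  rewrite <- (bottom_edge_integral f a b _ (V a) (V b)); auto; try lra.
  - apply (RInt_correct (V := C_R_CompleteNormedModule)), ex_CInt_horizontal; [lra |].
    intros x _; apply holo_at_Ccontinuous, Hh; [lra |].
    intros Hin; assert (X := HS _ Hin); simpl in X; lra.
  - exists K; intros Y HY; apply rect_integral_residues; try lra.
    split; [auto | split; [| intros x y _ Hy; apply Hh; lra]].
    intros s Hs; destruct (HKs s Hs) as [X1 X2]; assert (X3 := HS s Hs); unfold Im in X3.
    apply Rabs_lt_between in X1; apply Rabs_lt_between in X2; lra.
  - apply Hii; lra.
Qed.
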